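(* Let $\mathcal{A}$ and $\mathcal{B}$ be unital associative algebras. Then: (1) If $\rho: \mathcal{A} \to \mathcal{B}$ is a homomorphism, then $\rho * \rho^* : \mathcal{D}(\mathcal{A} ) \to \mathcal{D}(\mathcal{B})$ is a $*$-homomorphism, which is injective provided $\rho$ is injective. (2) If $\mathcal{A}$ is a subalgebra of an algebra $\mathcal{C}$, then $\mathcal{D}(\mathcal{A})$ is (canonically) a $*$-subalgebra of $\mathcal{D}(\mathcal{C})$. (3) If $\mathcal{A} = \mathbb{C} e \oplus \mathcal{A}_0$ is a vector space direct sum decomposition with $\mathcal{A}_0$ a subspace of $\mathcal{A}$, then $\mathcal{A}^* = \mathbb{C}e\oplus \mathcal{A}_0^*$ and, as a vector space, $$\mathcal{D}(\mathcal{A})=\mathbb{C}\oplus \mathcal{A}_0 \oplus \mathcal{A}_0^*\oplus (\mathcal{A}_0\otimes \mathcal{A}_0^* ) \oplus (\mathcal{A}_0^*\otimes \mathcal{A}_0) \oplus (\mathcal{A}_0 \otimes \mathcal{A}_0^* \otimes \mathcal{A}_0)\oplus (\mathcal{A}_0^* \otimes \mathcal{A}_0 \otimes \mathcal{A}_0^* )\oplus \cdots$$ (alternating tensor products). (4) $\mathcal{D}(\mathcal{A})$ is $*$-isomorphic to $\mathcal{D}(\mathcal{A}^* )$. (5) $\mathcal{D}(\mathcal{D}(\mathcal{A}))$ is $*$-isomorphic to $\mathcal{D}(\mathcal{A}) \star \mathcal{D}(\mathcal{A}^* )$.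
   Context: All algebras are complex and unital. For a unital associative algebra $\mathcal{A}$, $\mathcal{A}^*$ is an associative algebra with a fixed additive, conjugate-linear, anti-multiplicative bijection $\phi:\mathcal{A}\to\mathcal{A}^*$ ($\phi(ab)=\phi(b)\phi(a)$, $\phi(\lambda a)=\overline\lambda\phi(a)$); $\mathcal{A}_0^*=\phi(\mathcal{A}_0)$. The $*$-double $\mathcal{D}(\mathcal{A})$ is the unital free product $\mathcal{A}*\mathcal{A}^*$ of associative algebras with involution determined by $a^*=\phi(a)$ ($a\in\mathcal{A}$), $b^*=\phi^{-1}(b)$ ($b\in\mathcal{A}^*$). For a homomorphism $\rho:\mathcal{A}\to\mathcal{B}$, with fixed anti-isomorphism $\psi:\mathcal{B}\to\mathcal{B}^*$, $\rho*\rho^*:\mathcal{A}*\mathcal{A}^*\to\mathcal{B}*\mathcal{B}^*$ is the homomorphism equal to $\rho$ on $\mathcal{A}$ and to $\rho^*=\psi\circ\rho\circ\phi^{-1}$ on $\mathcal{A}^*$. In (5), $\mathcal{D}(\mathcal{A})$ and $\mathcal{D}(\mathcal{A}^* )$ are regarded as $*$-algebras, $\mathcal{D}(\mathcal{D}(\mathcal{A}))$ is the $*$-double of the underlying associative algebra of $\mathcal{D}(\mathcal{A})$, and $\star$ denotes the unital free product in the category of $*$-algebras. *)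

From mathcomp Require Import all_boot all_algebra complex Rstruct.

Set Implicit Arguments.
Unset Strict Implicit.
Unset Printing Implicit Defensive.

Import GRing.Theory Num.Theory.
Local Open Scope ring_scope.

Notation CC := (complex Rdefinitions.R).

Definition alg_hom (A B : algType CC) (f : A -> B) : Prop :=
  (forall (c : CC) (x y : A), f (c *: x + y) = c *: f x + f y) /\
  (forall x y : A, f (x * y) = f x * f y) /\
  f 1 = 1.

(* Additive, conjugate-linear, anti-multiplicative bijection
   (the fixed map phi : A -> A^* of the paper). *)
Definition anti_iso (A As : algType CC) (phi : A -> As) : Prop :=
  (forall x y : A, phi (x + y) = phi x + phi y) /\
  (forall (c : CC) (x : A), phi (c *: x) = c^* *: phi x) /\
  (forall x y : A, phi (x * y) = phi y * phi x) /\
  bijective phi.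

Definition star_involution (D : algType CC) (s : D -> D) : Prop :=
  (forall (c : CC) (x y : D), s (c *: x + y) = c^* *: s x + s y) /\
  (forall x y : D, s (x * y) = s y * s x) /\
  (forall x : D, s (s x) = x).

Definition star_hom (D1 D2 : algType CC) (s1 : D1 -> D1) (s2 : D2 -> D2)
  (f : D1 -> D2) : Prop :=
  alg_hom f /\ (forall x : D1, f (s1 x) = s2 (f x)).

Definition star_iso (D1 D2 : algType CC) (s1 : D1 -> D1) (s2 : D2 -> D2)
  (f : D1 -> D2) : Prop :=
  star_hom s1 s2 f /\ bijective f.

Definition is_free_product (A1 A2 F : algType CC)
  (i1 : A1 -> F) (i2 : A2 -> F) : Prop :=
  alg_hom i1 /\ alg_hom i2 /\
  forall (T : algType CC) (f1 : A1 -> T) (f2 : A2 -> T),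
    alg_hom f1 -> alg_hom f2 ->
    exists h : F -> T,
      (alg_hom h /\ (forall a, h (i1 a) = f1 a) /\ (forall b, h (i2 b) = f2 b)) /\
      (forall h' : F -> T,
         alg_hom h' -> (forall a, h' (i1 a) = f1 a) -> (forall b, h' (i2 b) = f2 b) ->
         forall x, h' x = h x).

Definition is_star_free_product (D1 D2 P : algType CC)
  (s1 : D1 -> D1) (s2 : D2 -> D2) (sP : P -> P)
  (p1 : D1 -> P) (p2 : D2 -> P) : Prop :=
  star_involution sP /\ star_hom s1 sP p1 /\ star_hom s2 sP p2 /\
  forall (T : algType CC) (sT : T -> T) (f1 : D1 -> T) (f2 : D2 -> T),
    star_involution sT -> star_hom s1 sT f1 -> star_hom s2 sT f2 ->
    exists h : P -> T,
      (star_hom sP sT h /\ (forall a, h (p1 a) = f1 a) /\ (forall b, h (p2 b) = f2 b)) /\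
      (forall h' : P -> T,
         star_hom sP sT h' -> (forall a, h' (p1 a) = f1 a) ->
         (forall b, h' (p2 b) = f2 b) ->
         forall x, h' x = h x).

(* (D, iA, iAs, s) is the *-double D(A) = A * A^* of A, where A^* = As comes
   with the fixed anti-isomorphism phi : A -> As; the involution s is
   determined by s a = phi a (a in A) and s b = phi^{-1} b (b in A^* ). *)
Definition is_star_double (A As : algType CC) (phi : A -> As)
  (D : algType CC) (iA : A -> D) (iAs : As -> D) (s : D -> D) : Prop :=
  is_free_product iA iAs /\ star_involution s /\
  (forall a : A, s (iA a) = iAs (phi a)) /\
  (forall a : A, s (iAs (phi a)) = iA a).

Definition linear_map (V W : lmodType CC) (f : V -> W) : Prop :=
  forall (c : CC) (x y : V), f (c *: x + y) = c *: f x + f y.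

Definition subspace (V : lmodType CC) (S : V -> Prop) : Prop :=
  S 0 /\ forall (c : CC) (x y : V), S x -> S y -> S (c *: x + y).

(* V = C e (+) S as a vector-space direct sum, with e = 1 the unit. *)
Definition unit_direct_sum (A : algType CC) (S : A -> Prop) : Prop :=
  subspace S /\
  (forall a : A, exists (c : CC) (a0 : A), S a0 /\ a = c *: 1 + a0) /\
  (forall (c : CC) (a0 : A), S a0 -> c *: 1 + a0 = 0 -> c = 0 /\ a0 = 0).

Definition image_sub (A As : algType CC) (phi : A -> As) (S : A -> Prop)
  : As -> Prop := fun b => exists a, S a /\ phi a = b.

Definition letter (A As : algType CC) (b : bool) : lmodType CC :=
  if b then (As : lmodType CC) else (A : lmodType CC).

Definition letter_sub (A As : algType CC) (phi : A -> As) (S : A -> Prop)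
  (b : bool) : letter A As b -> Prop :=
  match b as b0 return letter A As b0 -> Prop with
  | true => image_sub phi S
  | false => S
  end.

Definition letter_emb (A As D : algType CC) (iA : A -> D) (iAs : As -> D)
  (b : bool) : letter A As b -> D :=
  match b as b0 return letter A As b0 -> D with
  | true => iAs
  | false => iA
  end.

(* Alternating words of length n+1, starting with A (s = false) or with
   A^* (s = true): position i carries a letter of kind (s xor odd i). *)
Definition word (A As : algType CC) (s : bool) (n : nat) : Type :=
  forall i : 'I_n.+1, letter A As (xorb s (odd i)).

Definition admissible (A As : algType CC) (phi : A -> As) (S : A -> Prop)
  (s : bool) (n : nat) (x : word A As s n) : Prop :=
  forall i : 'I_n.+1, letter_sub phi S (x i).

Definition word_mul (A As D : algType CC) (iA : A -> D) (iAs : As -> D)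
  (s : bool) (n : nat) (x : word A As s n) : D :=
  \prod_(i < n.+1) letter_emb iA iAs (x i).

Definition multilinear_word (A As : algType CC) (phi : A -> As) (S : A -> Prop)
  (W : lmodType CC) (s : bool) (n : nat) (beta : word A As s n -> W) : Prop :=
  forall x : word A As s n, admissible phi S x ->
  forall (i : 'I_n.+1) (c : CC) (y z : letter A As (xorb s (odd i))),
    letter_sub phi S y -> letter_sub phi S z ->
    beta (dfwith x (c *: y + z)) = c *: beta (dfwith x y) + beta (dfwith x z).

(* "D = C (+) A_0 (+) A_0^* (+) (A_0 (x) A_0^* ) (+) (A_0^* (x) A_0) (+) ..."
   as vector spaces, via the canonical maps (1 and the multiplication maps on
   alternating words): this is the universal property of the direct sum of
   the alternating tensor products. *)
Definition alternating_tensor_decomposition (A As : algType CC) (phi : A -> As)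
  (S : A -> Prop) (D : algType CC) (iA : A -> D) (iAs : As -> D) : Prop :=
  forall (W : lmodType CC) (w0 : W)
         (beta : forall (s : bool) (n : nat), word A As s n -> W),
    (forall s n, multilinear_word phi S (beta s n)) ->
    exists L : D -> W,
      (linear_map L /\ L 1 = w0 /\
       (forall s n (x : word A As s n), admissible phi S x ->
          L (word_mul iA iAs x) = beta s n x)) /\
      (forall L' : D -> W,
         linear_map L' -> L' 1 = w0 ->
         (forall s n (x : word A As s n), admissible phi S x ->
            L' (word_mul iA iAs x) = beta s n x) ->
         forall d, L' d = L d).

(* Choosing a complement [A = C 1 (+) A_0], every element of the free product
   [D(A) = A * A^*] is uniquely a scalar plus a sum of products of alternating
   words in [A_0] and [A_0^*], which is (3).  Linear maps out of [D(A)] with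
   prescribed values on such words exist because [D(A)] acts on the space of
   multilinear families on alternating words (each factor by right
   multiplication followed by reduction into [C 1 (+) A_0]); they are unique by
   induction over the free product.

   For (1), [rho * rho^*] commutes with the involutions on the generators, hence
   everywhere.  If [rho] is injective, a linear left inverse [sigma] of [rho]
   and the complement [sigma^-1(A_0)] of [C 1] in [B] turn the normal form of
   [D(B)] into a linear left inverse of [rho * rho^*].  Complements and left
   inverses come from Zorn's lemma.  (2), (4) and (5) follow from the universal
   property of the *-double: *-homomorphisms [D(A) -> T] correspond to algebra
   homomorphisms [A -> T]. *)

From HB Require Import structures.
From mathcomp Require Import all_boot all_algebra complex Rstruct.
From mathcomp Require Import boolp classical_sets.

Set Implicit Arguments.
Unset Strict Implicit.
Unset Printing Implicit Defensive.

Import GRing.Theory Num.Theory.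
Local Open Scope ring_scope.

(** * Linear maps, homomorphisms and anti-homomorphisms *)

Section LinearMapTheory.
Variables (U V : lmodType CC) (f : U -> V).
Hypothesis hf : linear_map f.

Lemma linear_mapD x y : f (x + y) = f x + f y.
Proof. by have := hf 1 x y; rewrite !scale1r. Qed.

Lemma linear_map0 : f 0 = 0.
Proof. by apply: (addrI (f 0)); rewrite -linear_mapD !addr0. Qed.

Lemma linear_mapZ c x : f (c *: x) = c *: f x.
Proof. by have := hf c x 0; rewrite !addr0 linear_map0 addr0. Qed.

End LinearMapTheory.

Lemma linear_map_comb (U V : lmodType CC) (c : CC) (f g : U -> V) :
  linear_map f -> linear_map g -> linear_map (fun x => c *: f x + g x).
Proof.
move=> hf hg d x y; rewrite hf hg scalerDr !scalerA mulrC -scalerA.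
by rewrite addrACA scalerDr.
Qed.

Lemma linear_map_sub (U V : lmodType CC) (f g : U -> V) :
  linear_map f -> linear_map g -> linear_map (fun x => f x - g x).
Proof.
by move=> hf hg c x y; rewrite hf hg scalerBr addrACA opprD.
Qed.

Section AlgHomTheory.
Variables (A B : algType CC) (f : A -> B).
Hypothesis hf : alg_hom f.

Lemma alg_hom_linear : linear_map f. Proof. exact: hf.1. Qed.

Lemma alg_homD x y : f (x + y) = f x + f y. Proof. exact: (linear_mapD alg_hom_linear). Qed.
Lemma alg_homZ c x : f (c *: x) = c *: f x. Proof. exact: (linear_mapZ alg_hom_linear). Qed.
Lemma alg_homM x y : f (x * y) = f x * f y. Proof. exact: hf.2.1. Qed.
Lemma alg_hom1 : f 1 = 1. Proof. exact: hf.2.2. Qed.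

Lemma alg_hom_prod (I : Type) (r : seq I) (F : I -> A) :
  f (\prod_(i <- r) F i) = \prod_(i <- r) f (F i).
Proof.
elim: r => [|i r IH]; first by rewrite !big_nil alg_hom1.
by rewrite !big_cons alg_homM IH.
Qed.

End AlgHomTheory.

Lemma alg_hom_id (A : algType CC) : alg_hom (@id A).
Proof. by []. Qed.

Lemma alg_hom_comp (A B C : algType CC) (f : A -> B) (g : B -> C) :
  alg_hom f -> alg_hom g -> alg_hom (g \o f).
Proof.
move=> hf hg; split; [|split].
- by move=> c x y /=; rewrite hf.1 hg.1.
- by move=> x y /=; rewrite (alg_homM hf) (alg_homM hg).
- by rewrite /= (alg_hom1 hf) (alg_hom1 hg).
Qed.

Definition anti_hom (A B : algType CC) (f : A -> B) : Prop :=
  (forall (c : CC) (x y : A), f (c *: x + y) = c^* *: f x + f y) /\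
  (forall x y : A, f (x * y) = f y * f x).

Section AntiHomTheory.
Variables (A B : algType CC) (f : A -> B).
Hypothesis hf : anti_hom f.

Lemma anti_homD x y : f (x + y) = f x + f y.
Proof. by have := hf.1 1 x y; rewrite conjC1 !scale1r. Qed.

Lemma anti_hom0 : f 0 = 0.
Proof. by apply: (addrI (f 0)); rewrite -anti_homD !addr0. Qed.

Lemma anti_homM x y : f (x * y) = f y * f x. Proof. exact: hf.2. Qed.

End AntiHomTheory.

Lemma alg_hom_comp_anti (A B C : algType CC) (f : A -> B) (g : B -> C) :
  anti_hom f -> alg_hom g -> anti_hom (g \o f).
Proof.
move=> hf hg; split.
- by move=> c x y /=; rewrite hf.1 hg.1.
- by move=> x y /=; rewrite (anti_homM hf) (alg_homM hg).
Qed.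

Lemma anti_hom_comp (A B C : algType CC) (f : A -> B) (g : B -> C) :
  anti_hom f -> anti_hom g -> g (f 1) = 1 -> alg_hom (g \o f).
Proof.
move=> hf hg h1; split; [|split] => //.
- by move=> c x y /=; rewrite hf.1 hg.1 conjCK.
- by move=> x y /=; rewrite (anti_homM hf) (anti_homM hg).
Qed.

Lemma antimul_surj1 (A B : algType CC) (f : A -> B) :
  (forall x y, f (x * y) = f y * f x) -> (forall b, exists a, f a = b) -> f 1 = 1.
Proof.
move=> fM fS; have f1r : forall b, b * f 1 = b.
  by move=> b; case: (fS b) => a <-; rewrite -fM mul1r.
by rewrite -[f 1]mul1r f1r.
Qed.

Section AntiIsoTheory.
Variables (A B : algType CC) (phi : A -> B).
Hypothesis hphi : anti_iso phi.

Fact anti_iso_invertible : exists g : B -> A, cancel phi g /\ cancel g phi.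
Proof. by case: hphi.2.2.2 => g gK fK; exists g. Qed.

Definition anti_inv : B -> A := sval (cid anti_iso_invertible).

Lemma anti_invK : cancel phi anti_inv.
Proof. by rewrite /anti_inv; case: cid => ? []. Qed.

Lemma anti_invKV : cancel anti_inv phi.
Proof. by rewrite /anti_inv; case: cid => ? []. Qed.

Lemma anti_iso_anti : anti_hom phi.
Proof. by have [phiD [phiZ [phiM _]]] := hphi; split=> // c x y; rewrite phiD phiZ. Qed.

Lemma anti_iso_inj : injective phi.
Proof. exact: can_inj anti_invK. Qed.

Lemma anti_inv_anti : anti_hom anti_inv.
Proof.
split=> [c x y|x y]; apply: anti_iso_inj.
  by rewrite anti_invKV anti_iso_anti.1 conjCK !anti_invKV.
by rewrite anti_invKV (anti_homM anti_iso_anti) !anti_invKV.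
Qed.

Lemma anti_iso1 : phi 1 = 1.
Proof.
apply: antimul_surj1; first exact: anti_homM anti_iso_anti.
by move=> b; exists (anti_inv b); rewrite anti_invKV.
Qed.

Lemma anti_inv1 : anti_inv 1 = 1.
Proof. by apply: anti_iso_inj; rewrite anti_invKV anti_iso1. Qed.

End AntiIsoTheory.

Lemma anti_iso_comp (A B C : algType CC) (f : A -> B) (g : B -> C) :
  anti_iso f -> anti_iso g -> alg_hom (g \o f).
Proof.
move=> hf hg; apply: anti_hom_comp; try exact: anti_iso_anti.
by rewrite anti_iso1 // anti_iso1.
Qed.

Section StarInvolutionTheory.
Variables (D : algType CC) (s : D -> D).
Hypothesis hs : star_involution s.

Lemma star_involution_anti : anti_hom s.
Proof. by split; [exact: hs.1|exact: hs.2.1]. Qed.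

Lemma star_involutionK : involutive s.
Proof. exact: hs.2.2. Qed.

Lemma star_involution1 : s 1 = 1.
Proof.
apply: antimul_surj1; first exact: hs.2.1.
by move=> b; exists (s b); rewrite star_involutionK.
Qed.

End StarInvolutionTheory.

Lemma alg_hom_anti_conj (A As B C : algType CC) (phi : A -> As)
  (hphi : anti_iso phi) (rho : A -> B) (g : B -> C) :
  alg_hom rho -> anti_hom g -> g 1 = 1 -> alg_hom (g \o (rho \o anti_inv hphi)).
Proof.
move=> hrho hg g1; apply: anti_hom_comp.
- exact: alg_hom_comp_anti (anti_inv_anti hphi) hrho.
- exact: hg.
- by rewrite /= anti_inv1 (alg_hom1 hrho).
Qed.

(** * Free products *)

Section Subalgebra.
Variables (D : algType CC) (P : D -> Prop).
Hypotheses (P1 : P 1) (PD : forall c x y, P x -> P y -> P (c *: x + y))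
  (PM : forall x y, P x -> P y -> P (x * y)).

Record subalg := Subalg { subalg_val : D; subalg_valP : P subalg_val }.

Lemma subalg_ext (x y : subalg) : subalg_val x = subalg_val y -> x = y.
Proof.
case: x y => x xP [y yP] /= exy; subst y.
by congr Subalg; exact: Prop_irrelevance.
Qed.

Let P0 : P 0.
Proof. by have := PD (-1) P1 P1; rewrite scaleN1r addNr. Qed.

Let PZ c x : P x -> P (c *: x).
Proof. by move=> Px; have := PD c Px P0; rewrite addr0. Qed.

Let PA x y : P x -> P y -> P (x + y).
Proof. by move=> Px Py; have := PD 1 Px Py; rewrite scale1r. Qed.

HB.instance Definition _ := gen_eqMixin subalg.
HB.instance Definition _ := gen_choiceMixin subalg.

Let sub0 := Subalg P0.
Let subN (x : subalg) := Subalg (PZ (-1) (subalg_valP x)).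
Let subD (x y : subalg) := Subalg (PA (subalg_valP x) (subalg_valP y)).
Let sub1 := Subalg P1.
Let subM (x y : subalg) := Subalg (PM (subalg_valP x) (subalg_valP y)).
Let subZ (c : CC) (x : subalg) := Subalg (PZ c (subalg_valP x)).

Let subDA : associative subD.
Proof. by move=> x y z; apply: subalg_ext; rewrite /= addrA. Qed.
Let subDC : commutative subD.
Proof. by move=> x y; apply: subalg_ext; rewrite /= addrC. Qed.
Let sub0D : left_id sub0 subD.
Proof. by move=> x; apply: subalg_ext; rewrite /= add0r. Qed.
Let subND : left_inverse sub0 subN subD.
Proof. by move=> x; apply: subalg_ext; rewrite /= scaleN1r addNr. Qed.
HB.instance Definition _ := GRing.isZmodule.Build subalg subDA subDC sub0D subND.

Let subMA : associative subM.
Proof. by move=> x y z; apply: subalg_ext; rewrite /= mulrA. Qed.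
Let sub1M : left_id sub1 subM.
Proof. by move=> x; apply: subalg_ext; rewrite /= mul1r. Qed.
Let subM1 : right_id sub1 subM.
Proof. by move=> x; apply: subalg_ext; rewrite /= mulr1. Qed.
Let subMDl : left_distributive subM +%R.
Proof. by move=> x y z; apply: subalg_ext; rewrite /= mulrDl. Qed.
Let subMDr : right_distributive subM +%R.
Proof. by move=> x y z; apply: subalg_ext; rewrite /= mulrDr. Qed.
Let sub1_neq0 : sub1 != 0.
Proof. by apply/eqP => /(congr1 subalg_val) /= /eqP; rewrite oner_eq0. Qed.
HB.instance Definition _ :=
  GRing.Zmodule_isNzRing.Build subalg subMA sub1M subM1 subMDl subMDr sub1_neq0.

Let subZA a b x : subZ a (subZ b x) = subZ (a * b) x.
Proof. by apply: subalg_ext; rewrite /= scalerA. Qed.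
Let subZ1 : left_id 1 subZ.
Proof. by move=> x; apply: subalg_ext; rewrite /= scale1r. Qed.
Let subZDr : right_distributive subZ +%R.
Proof. by move=> a x y; apply: subalg_ext; rewrite /= scalerDr. Qed.
Let subZDl x : {morph subZ^~ x : a b / a + b}.
Proof. by move=> a b; apply: subalg_ext; rewrite /= scalerDl. Qed.
HB.instance Definition _ :=
  GRing.Zmodule_isLmodule.Build CC subalg subZA subZ1 subZDr subZDl.

Let subZAl a (x y : subalg) : a *: (x * y) = (a *: x) * y.
Proof. by apply: subalg_ext; rewrite /= scalerAl. Qed.
HB.instance Definition _ := GRing.Lmodule_isLalgebra.Build CC subalg subZAl.
Let subZAr a (x y : subalg) : a *: (x * y) = x * (a *: y).
Proof. by apply: subalg_ext; rewrite /= scalerAr. Qed.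
HB.instance Definition _ := GRing.Lalgebra_isAlgebra.Build CC subalg subZAr.

Definition subalg_algType : algType CC := subalg.

End Subalgebra.

Section FreeProductTheory.
Variables (A1 A2 F : algType CC) (i1 : A1 -> F) (i2 : A2 -> F).
Hypothesis hF : is_free_product i1 i2.

Lemma free_product_ext (T : algType CC) (f1 : A1 -> T) (f2 : A2 -> T) :
  alg_hom f1 -> alg_hom f2 -> exists h : F -> T,
    alg_hom h /\ (forall a, h (i1 a) = f1 a) /\ (forall b, h (i2 b) = f2 b).
Proof. by move=> hf1 hf2; have [h [H _]] := hF.2.2 T f1 f2 hf1 hf2; exists h. Qed.

Lemma free_product_uniq (T : algType CC) (g g' : F -> T) :
  alg_hom g -> alg_hom g' ->
  (forall a, g (i1 a) = g' (i1 a)) -> (forall b, g (i2 b) = g' (i2 b)) ->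
  forall x, g x = g' x.
Proof.
move=> hg hg' e1 e2 x.
have [h [_ hu]] := hF.2.2 T (g \o i1) (g \o i2)
  (alg_hom_comp hF.1 hg) (alg_hom_comp hF.2.1 hg).
by rewrite (hu g hg) // (hu g' hg') // => [a|b]; rewrite /= ?e1 ?e2.
Qed.

Lemma free_product_ind (P : F -> Prop) :
  P 1 -> (forall c x y, P x -> P y -> P (c *: x + y)) ->
  (forall x y, P x -> P y -> P (x * y)) ->
  (forall a, P (i1 a)) -> (forall b, P (i2 b)) -> forall x, P x.
Proof.
move=> P1 PD PM Pi1 Pi2.
pose S := subalg_algType P1 PD PM.
have hom_into (B : algType CC) (i : B -> F) (Pi : forall b, P (i b)) :
    alg_hom i -> alg_hom (fun b => Subalg (Pi b) : S).
  move=> hi; split; [|split] => [c x y|x y|]; apply: subalg_ext => /=.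
  - exact: hi.1.
  - exact: (alg_homM hi).
  - exact: (alg_hom1 hi).
have [h [hh [e1 e2]]] := free_product_ext (hom_into _ _ Pi1 hF.1) (hom_into _ _ Pi2 hF.2.1).
have hc : alg_hom (@subalg_val F P \o h) by apply: alg_hom_comp hh _.
move=> x; rewrite -(free_product_uniq hc (alg_hom_id F) _ _ x); first exact: subalg_valP.
- by move=> a; rewrite /= e1.
- by move=> b; rewrite /= e2.
Qed.

(* [s2 \o h \o s1] is a homomorphism agreeing with [h] on the generators. *)
Lemma free_product_star_hom (D : algType CC) (s1 : F -> F) (s2 : D -> D)
  (h : F -> D) :
  star_involution s1 -> star_involution s2 -> alg_hom h ->
  (forall a, h (s1 (i1 a)) = s2 (h (i1 a))) ->
  (forall b, h (s1 (i2 b)) = s2 (h (i2 b))) ->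
  star_hom s1 s2 h.
Proof.
move=> hs1 hs2 hh e1 e2; split=> // x.
have hg : alg_hom (s2 \o (h \o s1)).
  apply: anti_hom_comp; first exact: alg_hom_comp_anti (star_involution_anti hs1) hh.
    exact: star_involution_anti.
  by rewrite /= (star_involution1 hs1) (alg_hom1 hh) (star_involution1 hs2).
have := free_product_uniq hg hh _ _ (s1 x).
rewrite /= (star_involutionK hs1) => <- //= => [a|b].
  by rewrite e1 (star_involutionK hs2).
by rewrite e2 (star_involutionK hs2).
Qed.

End FreeProductTheory.

(** * Spaces of functions and the algebra of linear endomorphisms *)

Section FunctionSubspace.
Variables (T : Type) (W : lmodType CC) (P : (T -> W) -> Prop).
Hypotheses (P0 : P (fun _ => 0))
  (Pcomb : forall c f g, P f -> P g -> P (fun x => c *: f x + g x)).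

Record funsub := FunSub { funsub_val :> T -> W; funsub_valP : P funsub_val }.

Lemma funsub_ext (f g : funsub) : (forall x, f x = g x) -> f = g.
Proof.
case: f g => f fP [g gP] /= fg; have efg : f = g by apply: funext.
by subst g; congr FunSub; exact: Prop_irrelevance.
Qed.

HB.instance Definition _ := gen_eqMixin funsub.
HB.instance Definition _ := gen_choiceMixin funsub.

Let fun0 := FunSub P0.
Let funZ c (f : funsub) := FunSub (Pcomb c (funsub_valP f) P0).
Let funD (f g : funsub) := FunSub (Pcomb 1 (funsub_valP f) (funsub_valP g)).
Let funN (f : funsub) := funZ (-1) f.

Let funDA : associative funD.
Proof. by move=> f g h; apply: funsub_ext => x /=; rewrite !scale1r addrA. Qed.
Let funDC : commutative funD.
Proof. by move=> f g; apply: funsub_ext => x /=; rewrite !scale1r addrC. Qed.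
Let fun0D : left_id fun0 funD.
Proof. by move=> f; apply: funsub_ext => x /=; rewrite scale1r add0r. Qed.
Let funND : left_inverse fun0 funN funD.
Proof.
by move=> f; apply: funsub_ext => x /=; rewrite scale1r addr0 scaleN1r addNr.
Qed.
HB.instance Definition _ := GRing.isZmodule.Build funsub funDA funDC fun0D funND.

Let funZA a b f : funZ a (funZ b f) = funZ (a * b) f.
Proof. by apply: funsub_ext => x /=; rewrite !addr0 scalerA. Qed.
Let funZ1 : left_id 1 funZ.
Proof. by move=> f; apply: funsub_ext => x /=; rewrite addr0 scale1r. Qed.
Let funZDr : right_distributive funZ +%R.
Proof. by move=> a f g; apply: funsub_ext => x /=; rewrite !addr0 !scale1r scalerDr. Qed.
Let funZDl f : {morph funZ^~ f : a b / a + b}.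
Proof. by move=> a b; apply: funsub_ext => x /=; rewrite !addr0 !scale1r scalerDl. Qed.
HB.instance Definition _ :=
  GRing.Zmodule_isLmodule.Build CC funsub funZA funZ1 funZDr funZDl.

Definition funsub_lmodType : lmodType CC := funsub.

End FunctionSubspace.

Section Endomorphisms.
Variable V : lmodType CC.
Hypothesis V_nontrivial : exists v : V, v != 0.

Let lin0 : linear_map (fun _ : V => 0 : V).
Proof. by move=> c x y; rewrite scaler0 addr0. Qed.

Definition endo : Type := funsub (@linear_map V V).
HB.instance Definition _ := GRing.Lmodule.copy endo (funsub_lmodType lin0 (@linear_map_comb V V)).

Let lin_id : linear_map (@id V). Proof. by []. Qed.
Let lin_comp (f g : endo) : linear_map (fun v => f (g v)).
Proof. by move=> c x y; rewrite (funsub_valP g) (funsub_valP f). Qed.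

Let endo1 : endo := FunSub lin_id.
Let endoM (f g : endo) : endo := FunSub (lin_comp f g).

Let endoMA : associative endoM. Proof. by move=> f g h; apply: funsub_ext. Qed.
Let endo1M : left_id endo1 endoM. Proof. by move=> f; apply: funsub_ext. Qed.
Let endoM1 : right_id endo1 endoM. Proof. by move=> f; apply: funsub_ext. Qed.
Let endoMDl : left_distributive endoM +%R.
Proof. by move=> f g h; apply: funsub_ext. Qed.
Let endoMDr : right_distributive endoM +%R.
Proof.
move=> f g h; apply: funsub_ext => v /=.
by rewrite !scale1r (linear_mapD (funsub_valP f)).
Qed.
Let endo1_neq0 : endo1 != 0.
Proof.
apply/eqP => /(congr1 (fun f : endo => f)) e; case: V_nontrivial => v.
by rewrite -[v]/(endo1 v) e eqxx.
Qed.
HB.instance Definition _ :=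
  GRing.Zmodule_isNzRing.Build endo endoMA endo1M endoM1 endoMDl endoMDr endo1_neq0.

Let endoZAl a (f g : endo) : a *: (f * g) = (a *: f) * g.
Proof. by apply: funsub_ext. Qed.
HB.instance Definition _ := GRing.Lmodule_isLalgebra.Build CC endo endoZAl.
Let endoZAr a (f g : endo) : a *: (f * g) = f * (a *: g).
Proof. by apply: funsub_ext => v /=; rewrite !addr0 (linear_mapZ (funsub_valP f)). Qed.
HB.instance Definition _ := GRing.Lalgebra_isAlgebra.Build CC endo endoZAr.

Definition endo_algType : algType CC := endo.

Lemma endo_mulE (f g : endo_algType) v : (f * g) v = f (g v).
Proof. by []. Qed.

End Endomorphisms.

(** * Subspaces and unit direct sums *)

Section SubspaceTheory.
Variables (V : lmodType CC) (S : V -> Prop).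
Hypothesis hS : subspace S.

Lemma subspace0 : S 0. Proof. exact: hS.1. Qed.

Lemma subspace_comb c x y : S x -> S y -> S (c *: x + y). Proof. exact: hS.2. Qed.

Lemma subspaceD x y : S x -> S y -> S (x + y).
Proof. by move=> Sx Sy; have := subspace_comb 1 Sx Sy; rewrite scale1r. Qed.

Lemma subspaceZ c x : S x -> S (c *: x).
Proof. by move=> Sx; have := subspace_comb c Sx subspace0; rewrite addr0. Qed.

Lemma subspaceN x : S x -> S (- x).
Proof. by rewrite -scaleN1r; exact: subspaceZ. Qed.

End SubspaceTheory.

Section UnitDirectSum.
Variables (Z : algType CC) (S : Z -> Prop).
Hypothesis hS : unit_direct_sum S.

Let unit_dec x : {p : CC * Z | S p.2 /\ x = p.1 *: 1 + p.2}.
Proof. by apply: cid; have [c [a0 [Sa0 ->]]] := hS.2.1 x; exists (c, a0). Qed.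

Definition unit_coef x := (sval (unit_dec x)).1.
Definition unit_rest x := (sval (unit_dec x)).2.

Lemma unit_rest_sub x : S (unit_rest x). Proof. exact: (proj1 (svalP (unit_dec x))). Qed.

Lemma unit_decE x : x = unit_coef x *: 1 + unit_rest x.
Proof. exact: (proj2 (svalP (unit_dec x))). Qed.

Lemma unit_dec_uniq c a x : S a -> x = c *: 1 + a ->
  unit_coef x = c /\ unit_rest x = a.
Proof.
move=> Sa ex; have S_diff := subspaceD hS.1 (unit_rest_sub x) (subspaceN hS.1 Sa).
have : (unit_coef x - c) *: 1 + (unit_rest x - a) = 0.
  by rewrite scalerBl addrACA -opprD -unit_decE ex subrr.
case/(hS.2.2 _ _ S_diff) => /eqP + /eqP; rewrite !subr_eq0.
by move=> /eqP -> /eqP ->.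
Qed.

Lemma unit_dec_comb c x y :
  unit_coef (c *: x + y) = c * unit_coef x + unit_coef y /\
  unit_rest (c *: x + y) = c *: unit_rest x + unit_rest y.
Proof.
apply: unit_dec_uniq; first exact: (subspace_comb hS.1 _ (unit_rest_sub _) (unit_rest_sub _)).
by rewrite {1}(unit_decE x) {1}(unit_decE y) scalerDr scalerA scalerDl addrACA.
Qed.

Lemma unit_coef_comb c x y : unit_coef (c *: x + y) = c * unit_coef x + unit_coef y.
Proof. exact: (unit_dec_comb c x y).1. Qed.

Lemma unit_rest_comb c x y : unit_rest (c *: x + y) = c *: unit_rest x + unit_rest y.
Proof. exact: (unit_dec_comb c x y).2. Qed.

Lemma unit_dec_sub a : S a -> unit_coef a = 0 /\ unit_rest a = a.
Proof. by move=> Sa; apply: unit_dec_uniq => //; rewrite scale0r add0r. Qed.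

Lemma unit_dec1 : unit_coef 1 = 1 /\ unit_rest 1 = 0.
Proof. by apply: unit_dec_uniq; [exact: subspace0 hS.1|rewrite scale1r addr0]. Qed.

Lemma unit_decM a b :
  unit_coef (a * b) = unit_coef a * unit_coef b + unit_coef (unit_rest a * b) /\
  unit_rest (a * b) = unit_coef a *: unit_rest b + unit_rest (unit_rest a * b).
Proof.
by split; rewrite {1}(unit_decE a) mulrDl -scalerAl mul1r ?unit_coef_comb ?unit_rest_comb.
Qed.

End UnitDirectSum.

Lemma unit_direct_sum_kernel (Z : algType CC) (p : Z -> Z) :
  linear_map p -> p 1 = 1 -> (forall z, exists c, p z = c *: 1) ->
  unit_direct_sum (fun z => p z = 0).
Proof.
move=> hp p1 hv; split; [split|split].
- exact: linear_map0 hp.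
- by move=> c x y px py; rewrite hp px py scaler0 addr0.
- move=> z; have [c pz] := hv z; exists c, (z - c *: 1); split.
    by rewrite (linear_mapD hp) -scaleN1r !(linear_mapZ hp) p1 pz scaleN1r subrr.
  by rewrite addrC subrK.
- move=> c a0 pa0 e; have := congr1 p e.
  rewrite hp p1 pa0 addr0 (linear_map0 hp) => /eqP.
  rewrite scaler_eq0 oner_eq0 orbF => /eqP c0.
  by move: e; rewrite c0 scale0r add0r.
Qed.

Lemma unit_direct_sum_image (A As : algType CC) (phi : A -> As) (S : A -> Prop) :
  anti_iso phi -> unit_direct_sum S -> unit_direct_sum (image_sub phi S).
Proof.
move=> hphi hS; have ha := anti_iso_anti hphi.
split; [split|split].
- by exists 0; split; [exact: (subspace0 hS.1)|exact: (anti_hom0 ha)].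
- move=> c _ _ [x [Sx <-]] [y [Sy <-]]; exists (c^* *: x + y).
  by split; [exact: (subspace_comb hS.1 _ Sx Sy)|rewrite ha.1 conjCK].
- move=> b; have [c [a0 [Sa0 e]]] := hS.2.1 (anti_inv hphi b).
  exists c^*, (phi a0); split; first by exists a0.
  by rewrite -[b](anti_invKV hphi) e ha.1 (anti_iso1 hphi).
- move=> c _ [a0 [Sa0 <-]] e.
  have : phi (c^* *: 1 + a0) = phi 0 by rewrite ha.1 conjCK (anti_iso1 hphi) (anti_hom0 ha).
  move=> /(anti_iso_inj hphi) /(hS.2.2 _ _ Sa0) [/eqP c0 ->].
  by split; [move: c0; rewrite conjC_eq0 => /eqP|exact: (anti_hom0 ha)].
Qed.

(** * Linear retractions onto subspaces *)

Section Retraction.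
Local Open Scope classical_set_scope.
Variables (V : lmodType CC) (U : V -> Prop).
Hypothesis hU : subspace U.

(* Graphs of partially defined linear retractions onto [U]; Zorn's lemma
   yields a maximal one, which is total. *)
Definition retraction_graph (G : V * V -> Prop) : Prop :=
  [/\ (forall x y y', G (x, y) -> G (x, y') -> y = y'),
      (forall c x y x' y', G (x, y) -> G (x', y') -> G (c *: x + x', c *: y + y')),
      (forall u, U u -> G (u, u)) &
      (forall x y, G (x, y) -> U y)].

Let diagU (p : V * V) : Prop := U p.1 /\ p.2 = p.1.

Let retraction_graph_diagU : retraction_graph diagU.
Proof.
split.
- by move=> x y y' [_ /= ->] [_ /= ->].
- by move=> c x y x' y' [/= Ux ->] [/= Ux' ->]; split=> //=; exact: hU.2.
- by [].
- by move=> x y [/= Ux ->].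
Qed.

Let retraction_graph_pairs (H : V * V -> Prop) :
  (forall p q, H p -> H q -> exists K, retraction_graph K /\ K `<=` H /\ K p /\ K q) ->
  (forall u, U u -> H (u, u)) -> (forall x y, H (x, y) -> U y) ->
  retraction_graph H.
Proof.
move=> pairs hdiag hval; split => //.
- move=> x y y' h1 h2; have [K [[fK _ _ _] [_ [k1 k2]]]] := pairs _ _ h1 h2.
  exact: fK k1 k2.
- move=> c x y x' y' h1 h2; have [K [[_ cK _ _] [KH [k1 k2]]]] := pairs _ _ h1 h2.
  exact/KH/cK.
Qed.

Let extension (G : set (V * V)) := retraction_graph (G `|` diagU).

Let extension_chain (F : set (set (V * V))) :
  F `<=` extension -> total_on F subset -> extension (\bigcup_(X in F) X).
Proof.
move=> Fext tot; apply: retraction_graph_pairs; last 2 first.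
- by move=> u Uu; right.
- move=> x y [[X FX Xxy]|[_ /= ->]] //.
  by have [_ _ _ hval] := Fext _ FX; apply: (hval x); left.
have in_one X p q : F X -> (X `|` diagU) p -> (X `|` diagU) q ->
    exists K, retraction_graph K /\ K `<=` (\bigcup_(X in F) X) `|` diagU /\ K p /\ K q.
  move=> FX hp hq; exists (X `|` diagU); split; first exact: Fext.
  by split=> // r [Xr|dr]; [left; exists X|right].
move=> p q [[X FX Xp]|dp] [[Y FY Yq]|dq].
- have [XY|YX] := tot _ _ FX FY.
  + by apply: (in_one Y) => //; left => //; apply: XY.
  + by apply: (in_one X) => //; left => //; apply: YX.
- by apply: (in_one X) => //; [left|right].
- by apply: (in_one Y) => //; [right|left].
- exists diagU; split => //; split=> // r dr; by right.
Qed.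

(* Adjoining a vector [v] outside the domain of [G], sent to [0]. *)
Let extension_step (G : V * V -> Prop) v : retraction_graph G ->
  (forall y, ~ G (v, y)) ->
  retraction_graph (fun p => exists x y c, G (x, y) /\ p = (x + c *: v, y)).
Proof.
move=> [fG cG dG vG] nv; split.
- move=> x y y' [x1 [y1 [c1 [g1 [-> ->]]]]] [x2 [y2 [c2 [g2 []]]]] e ->.
  have [ec|nc] := eqVneq c1 c2.
    by subst c2; move/addIr: e => ex; subst x2; exact: fG g1 g2.
  exfalso; apply: (nv ((c1 - c2)^-1 *: (y2 - y1))).
  have g21 := cG (-1) _ _ _ _ g1 g2; rewrite !scaleN1r [- x1 + _]addrC [- y1 + _]addrC in g21.
  have := cG (c1 - c2)^-1 _ _ _ _ g21 (dG 0 (subspace0 hU)); rewrite !addr0.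
  suff -> : (c1 - c2)^-1 *: (x2 - x1) = v by [].
  have -> : x2 - x1 = (c1 - c2) *: v.
    have -> : x2 = x1 + (c1 *: v - c2 *: v) by rewrite addrA e addrK.
    by rewrite scalerBl addrC addKr.
  by rewrite scalerA mulVf ?scale1r // subr_eq0.
- move=> c x y x' y' [x1 [y1 [c1 [g1 [-> ->]]]]] [x2 [y2 [c2 [g2 [-> ->]]]]].
  exists (c *: x1 + x2), (c *: y1 + y2), (c * c1 + c2); split; first exact: cG.
  by rewrite scalerDr scalerDl scalerA addrACA.
- by move=> u Uu; exists u, u, 0; rewrite scale0r addr0; split=> //; exact: dG.
- by move=> x y [x1 [y1 [c1 [g1 [_ ->]]]]]; exact: vG g1.
Qed.

Lemma subspace_retraction : exists r : V -> V,
  [/\ linear_map r, forall v, U (r v) & forall u, U u -> r u = u].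
Proof.
have [A [extA maxA]] := Zorn_bigcup extension_chain.
pose G := A `|` diagU.
have [fG cG dG vG] : retraction_graph G := extA.
have total v : exists y, G (v, y).
  apply: contrapT => nv; have {}nv y : ~ G (v, y) by move=> g; apply: nv; exists y.
  pose G' (p : V * V) := exists x y c, G (x, y) /\ p = (x + c *: v, y).
  have GG' p : G p -> G' p by case: p => x y g; exists x, y, 0; rewrite scale0r addr0.
  have G'_ext : extension G'.
    rewrite /extension; have -> : G' `|` diagU = G'.
      by apply/seteqP; split=> [p [//|dp]|p]; [apply: GG'; right|left].
    exact: extension_step.
  apply: (maxA G') G'_ext; split; first by move=> p Ap; apply: GG'; left.
  move=> G'A; apply: (nv 0); left; apply: G'A.
  exists 0, 0, 1; rewrite add0r scale1r; split=> //.
  by right; split=> //=; exact: (subspace0 hU).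
pose r v := sval (cid (total v)).
have rP v : G (v, r v) := svalP (cid (total v)).
exists r; split.
- by move=> c x y; apply: fG (rP _) _; exact: cG.
- by move=> v; exact: vG (rP v).
- by move=> u Uu; exact: fG (rP u) (dG u Uu).
Qed.

End Retraction.

Lemma unit_direct_sum_exists (A : algType CC) : exists S : A -> Prop, unit_direct_sum S.
Proof.
pose U (a : A) := exists c : CC, a = c *: 1.
have hU : subspace U.
  split; first by exists 0; rewrite scale0r.
  by move=> c _ _ [d ->] [d' ->]; exists (c * d + d'); rewrite scalerDl scalerA.
have [r [hr rU rK]] := subspace_retraction hU.
exists (fun a => r a = 0); apply: unit_direct_sum_kernel => //.
by apply: rK; exists 1; rewrite scale1r.
Qed.

Lemma linear_left_inverse (U V : lmodType CC) (f : U -> V) :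
  linear_map f -> injective f -> exists g : V -> U, linear_map g /\ cancel f g.
Proof.
move=> hf f_inj; pose Im (v : V) := exists u, v = f u.
have hIm : subspace Im.
  split; first by exists 0; rewrite (linear_map0 hf).
  by move=> c _ _ [u ->] [u' ->]; exists (c *: u + u'); rewrite hf.
have [r [hr rIm rK]] := subspace_retraction hIm.
pose g v := sval (cid (rIm v)); have gP v : r v = f (g v) := svalP (cid (rIm v)).
exists g; split; last by move=> u; apply: f_inj; rewrite -gP rK //; exists u.
by move=> c x y; apply: f_inj; rewrite -gP hr hf !gP.
Qed.

Lemma unit_direct_sum_preim (B A : algType CC) (g : B -> A) (S : A -> Prop) :
  linear_map g -> g 1 = 1 -> unit_direct_sum S -> unit_direct_sum (fun b => S (g b)).
Proof.
move=> hg g1 hS; split; [split|split].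
- by rewrite (linear_map0 hg); exact: (subspace0 hS.1).
- by move=> c x y Sx Sy; rewrite hg; exact: (subspace_comb hS.1).
- move=> b; exists (unit_coef hS (g b)), (b - unit_coef hS (g b) *: 1); split.
    rewrite (linear_mapD hg) -scaleN1r !(linear_mapZ hg) g1 scaleN1r.
    by rewrite {1}(unit_decE hS (g b)) addrAC subrr add0r; exact: unit_rest_sub.
  by rewrite addrC subrK.
- move=> c b0 Sb0 e; have := congr1 g e.
  rewrite hg g1 (linear_map0 hg) => /(hS.2.2 _ _ Sb0) [c0 _].
  by move: e; rewrite c0 scale0r add0r.
Qed.

(** * Reduced words in a free product *)

Definition alternating (s : seq bool) := sorted (fun a b : bool => a != b) s.

Lemma alternating_cons b s :
  alternating (b :: s) = alternating s && (head (~~ b) s != b).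
Proof. by case: s => [|c t] /=; [case: b|rewrite /alternating /= andbC eq_sym]. Qed.

Lemma alternating_rcons s b :
  alternating (rcons s b) = alternating s && (last (~~ b) s != b).
Proof. by case: s => [|c t] /=; [case: b|rewrite /alternating /= rcons_path]. Qed.

Lemma alternating_catl s1 s2 : alternating (s1 ++ s2) -> alternating s1.
Proof.
elim/last_ind: s2 => [|s2 b IH]; first by rewrite cats0.
by rewrite -rcons_cat alternating_rcons => /andP[/IH].
Qed.

Lemma alternating_catr s1 s2 : alternating (s1 ++ s2) -> alternating s2.
Proof. by elim: s1 => [|b s1 IH] //; rewrite cat_cons alternating_cons => /andP[/IH]. Qed.

Definition split_last (T : Type) (l : seq T) : option (seq T * T) :=
  if l is e :: t then Some (belast e t, last e t) else None.

Lemma split_last_rcons (T : Type) (l : seq T) e : split_last (rcons l e) = Some (l, e).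
Proof. by case: l => [|h t] //=; rewrite belast_rcons last_rcons. Qed.

Section ReducedWords.
Variables (X Y : algType CC) (SX : X -> Prop) (SY : Y -> Prop).
Hypotheses (hSX : unit_direct_sum SX) (hSY : unit_direct_sum SY).

Definition symbol := (X + Y)%type.

Definition side (e : symbol) : bool := if e is inr _ then true else false.

Definition symbol_sub (e : symbol) : Prop :=
  match e with inl x => SX x | inr y => SY y end.

Fixpoint all_sub (l : seq symbol) : Prop :=
  if l is e :: t then symbol_sub e /\ all_sub t else True.

(* Reduced words index the normal form of the free product. *)
Definition reduced (l : seq symbol) : bool :=
  alternating (map side l) && `[< all_sub l >].

Lemma all_sub_cat l1 l2 : all_sub (l1 ++ l2) <-> all_sub l1 /\ all_sub l2.
Proof. by elim: l1 => [|e l1 IH] /=; [|rewrite IH]; tauto. Qed.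

Lemma all_sub_rcons l e : all_sub (rcons l e) <-> all_sub l /\ symbol_sub e.
Proof. by rewrite -cats1 all_sub_cat /=; tauto. Qed.

Lemma reduced_nil : reduced [::].
Proof. by rewrite /reduced /=; apply/asboolP. Qed.

Lemma reduced_catl l1 l2 : reduced (l1 ++ l2) -> reduced l1.
Proof.
rewrite /reduced map_cat => /andP[/alternating_catl -> /asboolP /all_sub_cat[? _]].
exact/asboolP.
Qed.

Lemma reduced_catr l1 l2 : reduced (l1 ++ l2) -> reduced l2.
Proof.
rewrite /reduced map_cat => /andP[/alternating_catr -> /asboolP /all_sub_cat[_ ?]].
exact/asboolP.
Qed.

Lemma reduced_slot (Z : algType CC) (S : Z -> Prop) (inj : Z -> symbol) :
  (forall z z', side (inj z) = side (inj z')) -> (forall z, symbol_sub (inj z) <-> S z) ->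
  forall l1 l2 y y', S y -> S y' ->
  reduced (l1 ++ inj y :: l2) = reduced (l1 ++ inj y' :: l2).
Proof.
move=> side_inj sub_inj l1 l2 y y' Sy Sy'; rewrite /reduced !map_cat /= (side_inj y y').
by congr (_ && _); apply: asbool_equiv_eq; rewrite !all_sub_cat /= !sub_inj; tauto.
Qed.

Variables (W : lmodType CC) (D : algType CC) (iX : X -> D) (iY : Y -> D).

Definition symbol_emb (e : symbol) : D := match e with inl x => iX x | inr y => iY y end.

Definition word_prod (l : seq symbol) : D := \prod_(e <- l) symbol_emb e.

Lemma word_prod_cons e l : word_prod (e :: l) = symbol_emb e * word_prod l.
Proof. by rewrite /word_prod big_cons. Qed.

(* [d] lies in the span of the products of reduced words. *)
Definition word_span (d : D) : Prop :=
  forall L : D -> W, linear_map L ->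
  (forall m, reduced m -> L (word_prod m) = 0) -> L d = 0.

Definition multilinear_at (Z : algType CC) (S : Z -> Prop) (inj : Z -> symbol)
  (F : seq symbol -> W) :=
  forall l1 l2 c y z, S y -> S z ->
    F (l1 ++ inj (c *: y + z) :: l2) = c *: F (l1 ++ inj y :: l2) + F (l1 ++ inj z :: l2).

Definition vanishes_off_reduced (F : seq symbol -> W) :=
  forall l, ~~ reduced l -> F l = 0.

(* The dual of the space spanned by the reduced words. *)
Definition reduced_multilinear (F : seq symbol -> W) :=
  [/\ multilinear_at SX inl F, multilinear_at SY inr F & vanishes_off_reduced F].

Section MultilinearAt.
Variables (Z : algType CC) (S : Z -> Prop) (inj : Z -> symbol) (F : seq symbol -> W).
Hypotheses (hS : subspace S) (hF : multilinear_at S inj F).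

Lemma multilinear_at0 l1 l2 : F (l1 ++ inj 0 :: l2) = 0.
Proof.
have := hF l1 l2 1 (subspace0 hS) (subspace0 hS); rewrite !scale1r addr0 => e.
by apply: (addrI (F (l1 ++ inj 0 :: l2))); rewrite addr0 -e.
Qed.

Lemma multilinear_at_rcons l c y z : S y -> S z ->
  F (rcons l (inj (c *: y + z))) = c *: F (rcons l (inj y)) + F (rcons l (inj z)).
Proof. by rewrite -!cats1; exact: hF. Qed.

End MultilinearAt.

Lemma multilinear_at_comb (Z : algType CC) (S : Z -> Prop) (inj : Z -> symbol) c
  (F G : seq symbol -> W) :
  multilinear_at S inj F -> multilinear_at S inj G ->
  multilinear_at S inj (fun l => c *: F l + G l).
Proof.
move=> hF hG l1 l2 d y z Sy Sz; rewrite hF // hG //.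
by rewrite scalerDr !scalerA mulrC -scalerA addrACA scalerDr.
Qed.

Lemma reduced_multilinear_comb c (F G : seq symbol -> W) :
  reduced_multilinear F -> reduced_multilinear G ->
  reduced_multilinear (fun l => c *: F l + G l).
Proof.
case=> F1 F2 F3 [G1 G2 G3]; split; try exact: multilinear_at_comb.
by move=> l nl; rewrite F3 // G3 // scaler0 addr0.
Qed.

Lemma reduced_multilinear0 : reduced_multilinear (fun _ => 0).
Proof. by split=> // l1 l2 c y z _ _; rewrite scaler0 addr0. Qed.

Definition family := funsub_lmodType reduced_multilinear0 reduced_multilinear_comb.

(* [Z] is one of the two factors, on side [k], with embedding [inj] and partial
   inverse [proj]; [Z'] is the other factor. *)
Section Action.
Variables (Z : algType CC) (S : Z -> Prop) (k : bool)
  (inj : Z -> symbol) (proj : symbol -> option Z).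
Hypotheses (hS : unit_direct_sum S)
  (projK : forall z, proj (inj z) = Some z)
  (projS : forall e z, proj e = Some z -> e = inj z)
  (projN : forall e, proj e = None -> side e = ~~ k)
  (side_inj : forall z, side (inj z) = k)
  (sub_inj : forall z, symbol_sub (inj z) <-> S z).
Variables (Z' : algType CC) (S' : Z' -> Prop) (inj' : Z' -> symbol).
Hypotheses (hS' : subspace S') (side_inj' : forall z, side (inj' z) = ~~ k)
  (sub_inj' : forall z, symbol_sub (inj' z) <-> S' z).

Local Notation coef := (unit_coef hS).
Local Notation rest := (unit_rest hS).

(* [act a F l] is [F] evaluated at the reduced form of the product [l a]:
   a final letter [x] from [Z] absorbs [a], and [x a] splits into its scalar
   part and its part in [S]. *)
Definition act (a : Z) (F : seq symbol -> W) (l : seq symbol) : W :=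
  if reduced l then
    match split_last l with
    | Some (l', e) =>
        match proj e with
        | Some x => coef (x * a) *: F l' + F (rcons l' (inj (rest (x * a))))
        | None => coef a *: F l + F (rcons l (inj (rest a)))
        end
    | None => coef a *: F l + F (rcons l (inj (rest a)))
    end
  else 0.

Definition ends_off (l : seq symbol) := forall l' e, l = rcons l' e -> proj e = None.

Lemma ends_off_nil : ends_off [::].
Proof. by move=> l' e /(congr1 size); rewrite size_rcons. Qed.

Lemma ends_off_rcons l e : proj e = None -> ends_off (rcons l e).
Proof. by move=> pe l' e' /rcons_inj [_ <-]. Qed.

Lemma proj_other e : side e = ~~ k -> proj e = None.
Proof.
move=> se; case pe: (proj e) => [z|] //.
by move: se; rewrite (projS pe) side_inj; case: k.
Qed.

Lemma act_nonreduced a F l : ~~ reduced l -> act a F l = 0.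
Proof. by rewrite /act => /negbTE ->. Qed.

Lemma act_ends_off a F l : reduced l -> ends_off l ->
  act a F l = coef a *: F l + F (rcons l (inj (rest a))).
Proof.
rewrite /act => -> off; case/lastP: l off => [|l e] off //.
by rewrite split_last_rcons (off l e).
Qed.

Lemma act_nil a F : act a F [::] = coef a *: F [::] + F [:: inj (rest a)].
Proof. by rewrite /act reduced_nil. Qed.

Lemma act_ends_other a F l e : proj e = None -> reduced (rcons l e) ->
  act a F (rcons l e) = coef a *: F (rcons l e) + F (rcons (rcons l e) (inj (rest a))).
Proof. by move=> pe R; rewrite /act R split_last_rcons pe. Qed.

Lemma act_ends_in a F l x : reduced (rcons l (inj x)) ->
  act a F (rcons l (inj x)) = coef (x * a) *: F l + F (rcons l (inj (rest (x * a)))).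
Proof. by rewrite /act => ->; rewrite split_last_rcons projK. Qed.

Lemma reduced_rcons_inj l x :
  reduced (rcons l (inj x)) <-> [/\ reduced l, ends_off l & S x].
Proof.
rewrite /reduced /= map_rcons alternating_rcons; split.
  move=> /andP[/andP[altl lastl] /asboolP /all_sub_rcons[subl subx]].
  split; [by rewrite altl; apply/asboolP| |exact/sub_inj].
  move=> l' e el; apply: proj_other; move: lastl; rewrite el map_rcons last_rcons side_inj.
  by case: (side e); case: k.
move=> [/andP[altl /asboolP subl] off Sx]; apply/andP; split; last first.
  by apply/asboolP/all_sub_rcons; split=> //; exact/sub_inj.
rewrite altl /=; case/lastP: l off {altl subl} => [|l e] off; first by rewrite side_inj; case: k.
by rewrite map_rcons last_rcons side_inj (projN (off l e erefl)); case: k.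
Qed.

Let comb_coef (c p1 p2 : CC) (u1 v1 v2 : W) :
  (c * p1 + p2) *: u1 + (c *: v1 + v2) = c *: (p1 *: u1 + v1) + (p2 *: u1 + v2).
Proof. by rewrite scalerDl scalerDr -scalerA addrACA. Qed.

Let comb_scale (c p : CC) (u1 u2 w1 w2 : W) :
  p *: (c *: u1 + u2) + (c *: w1 + w2) = c *: (p *: u1 + w1) + (p *: u2 + w2).
Proof. by rewrite scalerDr !scalerA mulrC -scalerA addrACA scalerDr. Qed.

Let act_multilinear_inner (V : algType CC) (SV : V -> Prop) (injV : V -> symbol)
  (side_injV : forall z z', side (injV z) = side (injV z'))
  (sub_injV : forall z, symbol_sub (injV z) <-> SV z) (hSV : subspace SV)
  a F : multilinear_at SV injV F -> forall l1 l2 e c y z, SV y -> SV z ->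
  act a F (l1 ++ injV (c *: y + z) :: rcons l2 e)
  = c *: act a F (l1 ++ injV y :: rcons l2 e) + act a F (l1 ++ injV z :: rcons l2 e).
Proof.
move=> hF l1 l2 e c y z Sy Sz.
have Sw : SV (c *: y + z) by exact: (subspace_comb hSV).
have rw := reduced_slot side_injV sub_injV l1 (rcons l2 e) Sw Sy.
have rz := reduced_slot side_injV sub_injV l1 (rcons l2 e) Sz Sy.
have catE v : l1 ++ injV v :: rcons l2 e = rcons (l1 ++ injV v :: l2) e by rewrite rcons_cat.
case R: (reduced (l1 ++ injV y :: rcons l2 e)); last first.
  by rewrite !act_nonreduced ?rw ?rz ?R // scaler0 addr0.
case pe: (proj e) => [x|].
  have ex := projS pe; subst e.
  rewrite !catE !act_ends_in -?catE ?rw ?rz ?R //.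
  have catE' v r : rcons (l1 ++ injV v :: l2) r = l1 ++ injV v :: rcons l2 r.
    by rewrite rcons_cat.
  by rewrite !catE' (hF l1) // (hF l1) //; exact: comb_scale.
have catE' v r : rcons (rcons (l1 ++ injV v :: l2) e) r =
    l1 ++ injV v :: rcons (rcons l2 e) r by rewrite !rcons_cat.
rewrite !catE !act_ends_other //; try by rewrite -catE ?rw ?rz R.
by rewrite !catE' -!catE (hF l1) // (hF l1) //; exact: comb_scale.
Qed.

Let act_multilinear_last a F : multilinear_at S inj F -> forall l c y z, S y -> S z ->
  act a F (rcons l (inj (c *: y + z)))
  = c *: act a F (rcons l (inj y)) + act a F (rcons l (inj z)).
Proof.
move=> hF l c y z Sy Sz.
have side_eq z1 z2 : side (inj z1) = side (inj z2) by rewrite !side_inj.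
have Sw : S (c *: y + z) by exact: (subspace_comb hS.1).
have rw := reduced_slot side_eq sub_inj l [::] Sw Sy.
have rz := reduced_slot side_eq sub_inj l [::] Sz Sy.
rewrite !cats1 in rw rz.
case R: (reduced (rcons l (inj y))); last first.
  by rewrite !act_nonreduced ?rw ?rz ?R // scaler0 addr0.
rewrite !act_ends_in ?rw ?rz ?R // mulrDl -scalerAl unit_coef_comb unit_rest_comb.
by rewrite (multilinear_at_rcons hF); [exact: comb_coef|exact: unit_rest_sub..].
Qed.

Let act_multilinear_last' a F : multilinear_at S' inj' F -> forall l c y z, S' y -> S' z ->
  act a F (rcons l (inj' (c *: y + z)))
  = c *: act a F (rcons l (inj' y)) + act a F (rcons l (inj' z)).
Proof.
move=> hF l c y z Sy Sz.
have side_eq z1 z2 : side (inj' z1) = side (inj' z2) by rewrite !side_inj'.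
have Sw : S' (c *: y + z) by exact: (subspace_comb hS').
have rw := reduced_slot side_eq sub_inj' l [::] Sw Sy.
have rz := reduced_slot side_eq sub_inj' l [::] Sz Sy.
rewrite !cats1 in rw rz.
have off v : proj (inj' v) = None by apply: proj_other.
case R: (reduced (rcons l (inj' y))); last first.
  by rewrite !act_nonreduced ?rw ?rz ?R // scaler0 addr0.
rewrite !act_ends_other ?rw ?rz ?R //.
have catE v r : rcons (rcons l (inj' v)) r = l ++ inj' v :: [:: r].
  by rewrite -!cats1 -catA.
by rewrite !catE (multilinear_at_rcons hF) // (hF l) //; exact: comb_scale.
Qed.

Lemma act_multilinear a F :
  multilinear_at S inj F -> multilinear_at S' inj' F -> vanishes_off_reduced F ->
  [/\ multilinear_at S inj (act a F), multilinear_at S' inj' (act a F)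
    & vanishes_off_reduced (act a F)].
Proof.
move=> F1 F2 F3; split.
- move=> l1 l2 c y z Sy Sz; case/lastP: l2 => [|l2 e].
    by rewrite !cats1; exact: act_multilinear_last.
  have side_eq z1 z2 : side (inj z1) = side (inj z2) by rewrite !side_inj.
  exact: (act_multilinear_inner side_eq sub_inj hS.1).
- move=> l1 l2 c y z Sy Sz; case/lastP: l2 => [|l2 e].
    by rewrite !cats1; exact: act_multilinear_last'.
  have side_eq z1 z2 : side (inj' z1) = side (inj' z2) by rewrite !side_inj'.
  exact: (act_multilinear_inner side_eq sub_inj' hS').
- by move=> l nl; rewrite act_nonreduced.
Qed.

Lemma act_linear_fun a c F G l :
  act a (fun m => c *: F m + G m) l = c *: act a F l + act a G l.
Proof.
case R: (reduced l); last by rewrite !act_nonreduced ?R // scaler0 addr0.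
rewrite /act R; case: (split_last l) => [[l' e]|]; first case: (proj e) => [x|].
all: by rewrite !scalerDr !scalerA mulrC -!scalerA addrACA.
Qed.

Lemma act_comb c a b F : multilinear_at S inj F -> forall l,
  act (c *: a + b) F l = c *: act a F l + act b F l.
Proof.
move=> hF l; case R: (reduced l); last by rewrite !act_nonreduced ?R // scaler0 addr0.
have rest_lin x : S (rest x) by exact: unit_rest_sub.
case/lastP: l R => [|l e] R.
  rewrite !act_nil unit_coef_comb unit_rest_comb.
  by rewrite (hF [::] [::]) //; exact: comb_coef.
case pe: (proj e) => [x|].
  have ex := projS pe; subst e; rewrite !act_ends_in // mulrDr -scalerAr.
  by rewrite unit_coef_comb unit_rest_comb (multilinear_at_rcons hF) //; exact: comb_coef.
rewrite !act_ends_other // unit_coef_comb unit_rest_comb.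
by rewrite (multilinear_at_rcons hF) //; exact: comb_coef.
Qed.

Let act_mul_ends_off a b F l : multilinear_at S inj F -> reduced l -> ends_off l ->
  coef (a * b) *: F l + F (rcons l (inj (rest (a * b))))
  = coef a *: act b F l + act b F (rcons l (inj (rest a))).
Proof.
move=> hF Rl off; have [coefM restM] := unit_decM hS a b.
rewrite act_ends_off // act_ends_in; last first.
  by apply/reduced_rcons_inj; split=> //; exact: unit_rest_sub.
rewrite coefM restM (multilinear_at_rcons hF); [exact: comb_coef|exact: unit_rest_sub..].
Qed.

Lemma act_mul a b F : multilinear_at S inj F -> forall l,
  act (a * b) F l = act a (act b F) l.
Proof.
move=> hF l; case R: (reduced l); last by rewrite !act_nonreduced ?R.
case/lastP: l R => [|l e] R.
  rewrite (act_nil (a * b)) (act_nil a).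
  exact: (act_mul_ends_off a b hF reduced_nil ends_off_nil).
case pe: (proj e) => [x|].
  have ex := projS pe; subst e; have [Rl off _] := (reduced_rcons_inj l x).1 R.
  by rewrite (act_ends_in (a * b)) // (act_ends_in a) // mulrA act_mul_ends_off.
rewrite (act_ends_other (a * b)) // (act_ends_other a) // act_mul_ends_off //.
exact: ends_off_rcons.
Qed.

Lemma act1 F : multilinear_at S inj F -> vanishes_off_reduced F -> forall l, act 1 F l = F l.
Proof.
move=> hF F0 l; case R: (reduced l); last by rewrite act_nonreduced ?R // F0 ?R.
have [coef1 rest1] := unit_dec1 hS.
case/lastP: l R => [|l e] R.
  by rewrite act_nil coef1 rest1 scale1r (multilinear_at0 hS.1 hF [::] [::]) addr0.
case pe: (proj e) => [x|].
  have ex := projS pe; subst e; have [_ _ Sx] := (reduced_rcons_inj l x).1 R.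
  have [coefx restx] := unit_dec_sub hS Sx.
  by rewrite act_ends_in // mulr1 coefx restx scale0r add0r.
rewrite act_ends_other // coef1 rest1 scale1r.
by rewrite -[rcons (rcons l e) _]cats1 (multilinear_at0 hS.1 hF) addr0.
Qed.

Lemma act_letter a F l : reduced (rcons l (inj a)) -> act a F l = F (rcons l (inj a)).
Proof.
case/reduced_rcons_inj => Rl off Sa; have [coefa resta] := unit_dec_sub hS Sa.
by rewrite act_ends_off // coefa resta scale0r add0r.
Qed.

Hypotheses (family_split : forall F, reduced_multilinear F <->
    [/\ multilinear_at S inj F, multilinear_at S' inj' F & vanishes_off_reduced F])
  (family_nontrivial : exists F : family, F != 0).

Definition act_family a (F : family) : family :=
  FunSub (let: And3 F1 F2 F3 := (family_split _).1 (funsub_valP F) in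
          (family_split _).2 (act_multilinear a F1 F2 F3)).

Lemma act_family_linear a : linear_map (act_family a).
Proof.
move=> c F G; apply: funsub_ext => l /=; rewrite !scale1r !addr0 -act_linear_fun.
by congr act; apply: funext => m /=; rewrite scale1r addr0.
Qed.

Definition act_endo (a : Z) : endo_algType family_nontrivial :=
  FunSub (act_family_linear a).

Lemma act_endo_hom : alg_hom act_endo.
Proof.
split; [|split] => [c a b|a b|]; apply: funsub_ext => F; apply: funsub_ext => l;
  have [F1 _ F3] := (family_split _).1 (funsub_valP F).
- by rewrite /= !scale1r !addr0 act_comb.
- by rewrite endo_mulE /= act_mul.
- by rewrite /= act1.
Qed.

Lemma act_endo_letter a (F : family) l :
  reduced (rcons l (inj a)) -> act_endo a F l = F (rcons l (inj a)).
Proof. exact: act_letter. Qed.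

Variable iZ : Z -> D.
Hypotheses (hiZ : alg_hom iZ) (emb_inj : forall z, symbol_emb (inj z) = iZ z).

Let reduced_cons_off z m : reduced m -> (forall e m', m = e :: m' -> proj e = None) ->
  S z -> reduced (inj z :: m).
Proof.
move=> /andP[altm /asboolP subm] off Sz; rewrite /reduced map_cons alternating_cons.
apply/andP; split; last by apply/asboolP; split=> //; exact/sub_inj.
rewrite altm /=; case: m off {altm subm} => [|e m] off; first by rewrite side_inj; case: k.
by rewrite /= (projN (off e m erefl)) side_inj; case: k.
Qed.

Lemma word_span_letter_mul a m : reduced m -> word_span (iZ a * word_prod m).
Proof.
move=> Rm L hL Lw.
(* Split [a] (resp. [x a], if [m] starts with a letter [x] of [Z]) into its
   scalar part and its part in [S]. *)
have split_mul b m' : reduced m' -> reduced (inj (unit_rest hS b) :: m') ->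
    L (iZ b * word_prod m') = 0.
  move=> Rm' Rbm'; rewrite {1}(unit_decE hS b) (alg_homD hiZ) (alg_homZ hiZ).
  rewrite (alg_hom1 hiZ) mulrDl -scalerAl mul1r (linear_mapD hL) (linear_mapZ hL).
  by rewrite Lw // scaler0 add0r -emb_inj -word_prod_cons Lw.
case: m Rm => [|e m] Rm.
  by apply: split_mul => //; apply: reduced_cons_off => //; exact: unit_rest_sub.
case pe: (proj e) => [x|]; last first.
  by apply: split_mul => //; apply: reduced_cons_off => // [? ? [<- _] //|]; exact: unit_rest_sub.
have ex := projS pe; subst e.
rewrite word_prod_cons emb_inj mulrA -(alg_homM hiZ); apply: split_mul.
  exact: (@reduced_catr [:: inj x]).
have side_eq z1 z2 : side (inj z1) = side (inj z2) by rewrite !side_inj.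
have Sx : S x by case/andP: Rm => _ /asboolP [/sub_inj].
by rewrite -(reduced_slot side_eq sub_inj [::] m Sx) //; exact: unit_rest_sub.
Qed.

End Action.

Lemma family_nontrivial : (exists w : W, w != 0) -> exists F : family, F != 0.
Proof.
case=> w w_neq0; pose F0 (l : seq symbol) := if l is [::] then w else 0.
have F0_ml : reduced_multilinear F0.
  split; try by move=> [|? ?] l2 c y z _ _ /=; rewrite scaler0 addr0.
  by case=> [|? ?] //; rewrite reduced_nil.
exists (FunSub F0_ml : family); apply/eqP => /(congr1 (fun F : family => F [::])) /=.
by move/eqP: w_neq0.
Qed.

Definition projX (e : symbol) : option X := if e is inl x then Some x else None.
Definition projY (e : symbol) : option Y := if e is inr y then Some y else None.

Let projXS e z : projX e = Some z -> e = inl z. Proof. by case: e => //= x [->]. Qed.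
Let projYS e z : projY e = Some z -> e = inr z. Proof. by case: e => //= x [->]. Qed.
Let projXN e : projX e = None -> side e = ~~ false. Proof. by case: e. Qed.
Let projYN e : projY e = None -> side e = ~~ true. Proof. by case: e. Qed.
Let splitX F : reduced_multilinear F <->
  [/\ multilinear_at SX inl F, multilinear_at SY inr F & vanishes_off_reduced F].
Proof. by []. Qed.
Let splitY F : reduced_multilinear F <->
  [/\ multilinear_at SY inr F, multilinear_at SX inl F & vanishes_off_reduced F].
Proof. by split; case. Qed.

Hypothesis hD : is_free_product iX iY.

Lemma normal_form_uniq (L : D -> W) : linear_map L ->
  (forall m, reduced m -> L (word_prod m) = 0) -> forall d, L d = 0.
Proof.
move=> hL Lw d.
suff /(_ [::] reduced_nil L hL Lw) : forall m, reduced m -> word_span (d * word_prod m).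
  by rewrite /word_prod big_nil mulr1.
elim/(free_product_ind hD): d.
- by move=> m Rm L' hL' Lw'; rewrite mul1r Lw'.
- move=> c x y Sx Sy m Rm L' hL' Lw'.
  by rewrite mulrDl -scalerAl (linear_mapD hL') (linear_mapZ hL') Sx // Sy // scaler0 add0r.
- move=> x y Sx Sy m Rm L' hL' Lw'; rewrite -mulrA.
  apply: (Sy m Rm (fun e => L' (x * e))) => [c u v|m' Rm']; last exact: Sx.
  by rewrite mulrDr -scalerAr hL'.
- move=> a m Rm; apply: (@word_span_letter_mul _ _ false inl projX hSX) => //.
  exact: hD.1.
- move=> b m Rm; apply: (@word_span_letter_mul _ _ true inr projY hSY) => //.
  exact: hD.2.1.
Qed.

Section Existence.
Hypothesis W_nontrivial : exists w : W, w != 0.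
Let family_nz := family_nontrivial W_nontrivial.

Let actX := @act_endo _ _ false inl projX hSX (fun _ => erefl) projXS (fun _ => erefl)
  (fun _ => iff_refl _) _ _ inr hSY.1 (fun _ => erefl) (fun _ => iff_refl _) splitX family_nz.
Let actY := @act_endo _ _ true inr projY hSY (fun _ => erefl) projYS (fun _ => erefl)
  (fun _ => iff_refl _) _ _ inl hSX.1 (fun _ => erefl) (fun _ => iff_refl _) splitY family_nz.

Lemma normal_form_ext (F0 : family) : exists L : D -> W,
  linear_map L /\ forall m, reduced m -> L (word_prod m) = F0 m.
Proof.
have actX_hom : alg_hom actX by apply: act_endo_hom.
have actY_hom : alg_hom actY by apply: act_endo_hom.
have [h [hh [hX hY]]] := free_product_ext hD actX_hom actY_hom.
exists (fun d => h d F0 [::]); split.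
  by move=> c x y; rewrite hh.1 /= !scale1r !addr0.
have key m (G : family) l : reduced (l ++ m) -> h (word_prod m) G l = G (l ++ m).
  elim: m G l => [|e m IH] G l Rlm; first by rewrite /word_prod big_nil (alg_hom1 hh) cats0.
  have Rle : reduced (rcons l e) by apply: (@reduced_catl _ m); rewrite cat_rcons.
  rewrite word_prod_cons (alg_homM hh) endo_mulE.
  by case: e Rlm Rle => [x|y] Rlm Rle /=; rewrite ?hX ?hY act_endo_letter // IH cat_rcons.
by move=> m Rm; rewrite key.
Qed.

End Existence.
End ReducedWords.

Arguments side {X Y} e.

(** * Alternating tensor products *)

Lemma alternatingP (bs : seq bool) : alternating bs <->
  forall i, (i < size bs)%N -> nth false bs i = xorb (nth false bs 0) (odd i).
Proof.
split.
  elim: bs => [|b bs IH] // + i; rewrite alternating_cons => /andP[alt_bs hd_bs].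
  case: i => [|i] /=; first by move: hd_bs; case: b.
  rewrite ltnS => lt_i; rewrite IH //.
  case: bs hd_bs alt_bs IH lt_i => [|c t] //= hd_bs _ _ _.
  by move: hd_bs; case: b; case: c => //= _; case: (odd i).
elim: bs => [|b bs IH] // nth_bs; rewrite alternating_cons; apply/andP; split.
  apply: IH => i lt_i; have nth_i := nth_bs i.+1 lt_i; have nth_1 := nth_bs 1%N.
  case: bs nth_bs nth_i nth_1 lt_i => [|c t] //= _ nth_i /(_ erefl) nth_1 _.
  by rewrite nth_i nth_1 /=; case: b {nth_i} nth_1; case: c; case: (odd i).
case: bs nth_bs {IH} => [|c t] nth_bs; first by clear nth_bs; case: b.
by have := nth_bs 1%N erefl; clear nth_bs; case: b; case: c.
Qed.

Section WordConversion.
Variables (A As : algType CC) (phi : A -> As) (S : A -> Prop).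
Local Notation SY := (image_sub phi S).
Local Notation symbol := (symbol A As).
Local Notation reduced := (reduced S SY).

Definition letter_symbol (b : bool) : letter A As b -> symbol :=
  match b as b0 return letter A As b0 -> symbol with
  | true => fun y => inr y
  | false => fun x => inl x
  end.

(* Junk value [0] on symbols of the wrong side. *)
Definition symbol_letter (b : bool) (e : symbol) : letter A As b :=
  match b as b0 return letter A As b0 with
  | true => if e is inr y then y else 0
  | false => if e is inl x then x else 0
  end.

Definition word_of_seq (s : bool) (n : nat) (l : seq symbol) : word A As s n :=
  fun i => symbol_letter (xorb s (odd i)) (nth (inl 0) l i).
Arguments word_of_seq : clear implicits.

Definition seq_of_word (s : bool) (n : nat) (x : word A As s n) : seq symbol :=
  [seq letter_symbol (x i) | i <- enum 'I_n.+1].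

Lemma letter_symbolK b (y : letter A As b) : symbol_letter b (letter_symbol y) = y.
Proof. by case: b y. Qed.

Lemma side_letter_symbol b (y : letter A As b) : side (letter_symbol y) = b.
Proof. by case: b y. Qed.

Lemma symbol_letterK b e : side e = b -> letter_symbol (symbol_letter b e) = e.
Proof. by case: b; case: e. Qed.

Lemma symbol_sub_letter b (y : letter A As b) :
  symbol_sub S SY (letter_symbol y) <-> letter_sub phi S y.
Proof. by case: b y. Qed.

Lemma letter_sub_symbol b e :
  side e = b -> symbol_sub S SY e -> letter_sub phi S (symbol_letter b e).
Proof. by case: b; case: e. Qed.

Lemma size_seq_of_word s n (x : word A As s n) : size (seq_of_word x) = n.+1.
Proof. by rewrite size_map size_enum_ord. Qed.

Lemma nth_seq_of_word s n (x : word A As s n) (i : 'I_n.+1) :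
  nth (inl 0) (seq_of_word x) i = letter_symbol (x i).
Proof. by rewrite (nth_map i) ?size_enum_ord // nth_ord_enum. Qed.

Lemma seq_of_wordK s n (x : word A As s n) : word_of_seq s n (seq_of_word x) = x.
Proof.
by apply: functional_extensionality_dep => i; rewrite /word_of_seq nth_seq_of_word letter_symbolK.
Qed.

Lemma side_nth_seq_of_word s n (x : word A As s n) i : (i < n.+1)%N ->
  nth false (map side (seq_of_word x)) i = xorb s (odd i).
Proof.
move=> lt_i; rewrite (nth_map (inl 0)) ?size_seq_of_word //.
by rewrite (nth_seq_of_word x (Ordinal lt_i)) side_letter_symbol.
Qed.

Lemma reduced_seq_of_word s n (x : word A As s n) :
  admissible phi S x -> reduced (seq_of_word x).
Proof.
move=> adm_x; apply/andP; split.
  apply/alternatingP => i; rewrite size_map size_seq_of_word => lt_i.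
  by rewrite !side_nth_seq_of_word //=; case: s x adm_x.
apply/asboolP.
have : forall i : 'I_n.+1, symbol_sub S SY (nth (inl 0) (seq_of_word x) i).
  by move=> i; rewrite nth_seq_of_word; apply/symbol_sub_letter.
rewrite -(size_seq_of_word x); elim: (seq_of_word x) => [|e l IH] //= sub_l.
split; first exact: (sub_l (Ordinal (ltn0Sn _))).
by apply: IH => i; exact: (sub_l (@Ordinal (size l).+1 i.+1 (ltn_ord i))).
Qed.

Lemma side_nth_reduced (l : seq symbol) : reduced l -> forall i, (i < size l)%N ->
  side (nth (inl 0) l i) = xorb (side (nth (inl 0) l 0)) (odd i).
Proof.
move=> /andP[/alternatingP alt_l _] i lt_i; have := alt_l i; rewrite size_map.
by move=> /(_ lt_i); rewrite !(nth_map (inl 0)) // (leq_ltn_trans (leq0n _) lt_i).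
Qed.

Lemma symbol_sub_nth_reduced (l : seq symbol) : reduced l ->
  forall i, (i < size l)%N -> symbol_sub S SY (nth (inl 0) l i).
Proof.
move=> /andP[_ /asboolP]; elim: l => [|e l IH] //= [sub_e sub_l] [|i] //= lt_i.
exact: IH.
Qed.

Lemma word_of_seqK (e : symbol) (t : seq symbol) : reduced (e :: t) ->
  seq_of_word (word_of_seq (side e) (size t) (e :: t)) = e :: t.
Proof.
move=> R; apply: (@eq_from_nth _ (inl 0)); first by rewrite size_seq_of_word.
move=> i; rewrite size_seq_of_word => lt_i.
rewrite (nth_seq_of_word _ (Ordinal lt_i)) /word_of_seq /= symbol_letterK //.
exact: side_nth_reduced.
Qed.

Lemma admissible_word_of_seq (e : symbol) (t : seq symbol) : reduced (e :: t) ->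
  admissible phi S (word_of_seq (side e) (size t) (e :: t)).
Proof.
move=> R i; have lt_i : (i < size (e :: t))%N by exact: ltn_ord.
by apply: letter_sub_symbol; [exact: (side_nth_reduced R lt_i)|exact: symbol_sub_nth_reduced].
Qed.

Lemma word_of_seq_slot s n (l1 l2 : seq symbol) (e e' : symbol) (lt_l1 : (size l1 < n.+1)%N) :
  word_of_seq s n (l1 ++ e :: l2) =
  @dfwith 'I_n.+1 (fun j => letter A As (xorb s (odd j)))
    (word_of_seq s n (l1 ++ e' :: l2)) (Ordinal lt_l1) (symbol_letter _ e).
Proof.
apply: functional_extensionality_dep => j; case: dfwithP => [|j0 neq_j0].
  by rewrite /word_of_seq /= nth_cat ltnn subnn.
rewrite /word_of_seq; congr symbol_letter; rewrite !nth_cat.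
case: ltnP => // le_l1_j0; case E: (j0 - size l1)%N => [|m] //.
exfalso; move: neq_j0; rewrite -val_eqE /=; apply/negP/negPn/eqP.
by apply/anti_leq; rewrite le_l1_j0 /= -subn_eq0 E.
Qed.

Variables (D : algType CC) (iA : A -> D) (iAs : As -> D).

Lemma word_prod_seq_of_word s n (x : word A As s n) :
  word_prod iA iAs (seq_of_word x) = word_mul iA iAs x.
Proof.
rewrite /word_prod /word_mul big_map -[index_enum _]enumT.
by apply: eq_bigr => i _; case: (xorb s (odd i)) (x i).
Qed.

End WordConversion.

Arguments word_of_seq {A As} s n l.

Section TensorDecomposition.
Variables (A As : algType CC) (phi : A -> As) (S : A -> Prop).
Local Notation SY := (image_sub phi S).
Local Notation symbol := (symbol A As).
Local Notation reduced := (reduced S SY).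
Unset Implicit Arguments.
Variables (W : lmodType CC) (w0 : W) (beta : forall s n, word A As s n -> W).
Set Implicit Arguments.
Hypotheses (hS : subspace S) (hSY : subspace SY)
  (hbeta : forall s n, multilinear_word phi S (beta s n)).

Let beta_seq (l : seq symbol) : W :=
  if l is e :: t then beta (side e) (size t) (word_of_seq (side e) (size t) l) else w0.

Definition word_family (l : seq symbol) : W := if reduced l then beta_seq l else 0.

Lemma word_family_seq_of_word s n (x : word A As s n) :
  admissible phi S x -> word_family (seq_of_word x) = beta s n x.
Proof.
move=> adm_x; rewrite /word_family reduced_seq_of_word //.
case E: (seq_of_word x) => [|e t]; first by have := size_seq_of_word x; rewrite E.
have se : side e = s.
  by have := side_nth_seq_of_word x (ltn0Sn n); rewrite E /=; case: s x adm_x E.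
have st : size t = n by have := size_seq_of_word x; rewrite E => -[].
by subst s n; rewrite /= -E seq_of_wordK.
Qed.

Let word_family_multilinear_at (Z : algType CC) (SZ : Z -> Prop) (inj : Z -> symbol)
  (side_inj : forall z z', side (inj z) = side (inj z'))
  (sub_inj : forall z, symbol_sub S SY (inj z) <-> SZ z)
  (letter_inj : forall b c y z, symbol_letter b (inj (c *: y + z)) =
     c *: symbol_letter b (inj y) + symbol_letter b (inj z))
  (hSZ : subspace SZ) :
  multilinear_at SZ inj word_family.
Proof.
move=> l1 l2 c y z Sy Sz.
have Sw : SZ (c *: y + z) by exact: (subspace_comb hSZ).
rewrite /word_family (reduced_slot side_inj sub_inj l1 l2 Sw Sy).
rewrite (reduced_slot side_inj sub_inj l1 l2 Sz Sy).
case R: (reduced (l1 ++ inj y :: l2)); last by rewrite scaler0 addr0.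
have beta_seqE v : beta_seq (l1 ++ inj v :: l2) =
    beta (side (nth (inl 0) (l1 ++ inj y :: l2) 0)) (size l1 + size l2)
      (word_of_seq _ _ (l1 ++ inj v :: l2)).
  by case: l1 {R} => [|e l1] /=; [rewrite (side_inj v y)|rewrite size_cat /= addnS].
have adm_y : admissible phi S (word_of_seq (side (nth (inl 0) (l1 ++ inj y :: l2) 0))
    (size l1 + size l2) (l1 ++ inj y :: l2)).
  move: R; case: l1 {beta_seqE} => [|e l1] R /=; first exact: (admissible_word_of_seq R).
  have -> : ((size l1).+1 + size l2)%N = size (l1 ++ inj y :: l2).
    by rewrite size_cat /= addnS addSn.
  exact: (admissible_word_of_seq R).
rewrite !beta_seqE.
set s := side _ in adm_y *; set n := (size l1 + size l2)%N in adm_y *.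
have lt_l1 : (size l1 < n.+1)%N by rewrite ltnS leq_addr.
have sub_slot v : SZ v -> letter_sub phi S (symbol_letter (xorb s (odd (Ordinal lt_l1))) (inj v)).
  move=> Sv; apply: letter_sub_symbol; last exact/sub_inj.
  have := side_nth_reduced R (i := size l1); rewrite nth_cat ltnn subnn /= (side_inj v y).
  by apply; rewrite size_cat /= addnS ltnS leq_addr.
rewrite (word_of_seq_slot s l2 (inj (c *: y + z)) (inj y) lt_l1).
rewrite (word_of_seq_slot s l2 (inj z) (inj y) lt_l1) letter_inj (hbeta adm_y); try exact: sub_slot.
congr (_ *: _ + _); congr beta; apply: functional_extensionality_dep => j.
by case: dfwithP => [|j0 _] //; rewrite /word_of_seq /= nth_cat ltnn subnn.
Qed.

Lemma word_family_multilinear : reduced_multilinear S SY word_family.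
Proof.
split.
- apply: word_family_multilinear_at => // b c y z.
  by case: b => /=; rewrite ?scaler0 ?addr0.
- apply: word_family_multilinear_at => // b c y z.
  by case: b => /=; rewrite ?scaler0 ?addr0.
- by move=> l /negbTE Rl; rewrite /word_family Rl.
Qed.

End TensorDecomposition.

Lemma free_product_tensor_decomposition (A As : algType CC) (phi : A -> As)
  (S : A -> Prop) (D : algType CC) (iA : A -> D) (iAs : As -> D) :
  anti_iso phi -> unit_direct_sum S -> is_free_product iA iAs ->
  alternating_tensor_decomposition phi S iA iAs.
Proof.
move=> hphi hS hD W w0 beta hbeta; have hSY := unit_direct_sum_image hphi hS.
have [W_nontrivial|W0] := pselect (exists w : W, w != 0); last first.
  have all0 (w : W) : w = 0 by apply: contrapT => nw; apply: W0; exists w; apply/eqP.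
  exists (fun _ => 0); split; last by move=> L' _ _ _ d; exact: all0.
  by split=> [c x y|]; [rewrite scaler0 addr0|split=> [|*]; exact: esym (all0 _)].
pose F0 : family S (image_sub phi S) W :=
  FunSub (word_family_multilinear w0 hS.1 hSY.1 hbeta).
have [L [hL Lw]] := normal_form_ext hS hSY hD W_nontrivial F0.
have L1 : L 1 = w0.
  by have := Lw [::] (reduced_nil _ _); rewrite /word_prod big_nil /= /word_family reduced_nil.
have L_word s n (x : word A As s n) : admissible phi S x -> L (word_mul iA iAs x) = beta s n x.
  move=> adm_x; rewrite -word_prod_seq_of_word Lw ?reduced_seq_of_word //=.
  exact: word_family_seq_of_word.
exists L; split=> // L' hL' L'1 L'_word d; apply/eqP; rewrite -subr_eq0; apply/eqP.
apply: (normal_form_uniq hS hSY hD (linear_map_sub hL' hL)) => -[|e t] Ret.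
  by rewrite /word_prod big_nil L1 L'1 subrr.
rewrite -(word_of_seqK Ret) word_prod_seq_of_word L'_word ?L_word ?subrr //.
all: exact: admissible_word_of_seq.
Qed.

(** * Universal properties of *-doubles and *-free products *)

Lemma star_hom_id (D : algType CC) (s : D -> D) : star_hom s s id.
Proof. by []. Qed.

Lemma star_hom_comp (D1 D2 D3 : algType CC) (s1 : D1 -> D1) (s2 : D2 -> D2)
  (s3 : D3 -> D3) (f : D1 -> D2) (g : D2 -> D3) :
  star_hom s1 s2 f -> star_hom s2 s3 g -> star_hom s1 s3 (g \o f).
Proof.
move=> [hf sf] [hg sg]; split; first exact: alg_hom_comp.
by move=> x /=; rewrite sf sg.
Qed.

Section StarDouble.
Variables (A As : algType CC) (phi : A -> As) (D : algType CC)
  (iA : A -> D) (iAs : As -> D) (s : D -> D).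
Hypotheses (hphi : anti_iso phi) (hD : is_star_double phi iA iAs s).
Variables (T : algType CC) (sT : T -> T).
Hypothesis hsT : star_involution sT.

Lemma star_double_star_hom (h : D -> T) : alg_hom h ->
  (forall a, h (iAs (phi a)) = sT (h (iA a))) -> star_hom s sT h.
Proof.
move=> hh h_iAs; apply: (free_product_star_hom hD.1 hD.2.1 hsT hh) => [a|b].
  by rewrite hD.2.2.1 h_iAs.
by rewrite -[b](anti_invKV hphi) hD.2.2.2 h_iAs (star_involutionK hsT).
Qed.

Lemma star_double_ext (f : A -> T) : alg_hom f ->
  exists h : D -> T, [/\ star_hom s sT h, forall a, h (iA a) = f a
    & forall a, h (iAs (phi a)) = sT (f a)].
Proof.
move=> hf; have hfs := alg_hom_anti_conj hphi hf (star_involution_anti hsT)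
  (star_involution1 hsT).
have [h [hh [h_iA h_iAs]]] := free_product_ext hD.1 hf hfs.
have h_iAs_phi a : h (iAs (phi a)) = sT (f a) by rewrite h_iAs /= anti_invK.
exists h; split=> //; apply: star_double_star_hom => // a.
by rewrite h_iAs_phi h_iA.
Qed.

Lemma star_double_uniq (h h' : D -> T) : star_hom s sT h -> star_hom s sT h' ->
  (forall a, h (iA a) = h' (iA a)) -> forall x, h x = h' x.
Proof.
move=> [hh sh] [hh' sh'] e; apply: (free_product_uniq hD.1 hh hh' e) => b.
by rewrite -[b](anti_invKV hphi) -hD.2.2.1 sh sh' e.
Qed.

End StarDouble.

Section StarFreeProduct.
Variables (D1 D2 P : algType CC) (s1 : D1 -> D1) (s2 : D2 -> D2) (sP : P -> P)
  (p1 : D1 -> P) (p2 : D2 -> P).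
Hypothesis hP : is_star_free_product s1 s2 sP p1 p2.

Lemma star_free_product_uniq (T : algType CC) (sT : T -> T) (h h' : P -> T) :
  star_involution sT -> star_hom sP sT h -> star_hom sP sT h' ->
  (forall a, h (p1 a) = h' (p1 a)) -> (forall b, h (p2 b) = h' (p2 b)) ->
  forall x, h x = h' x.
Proof.
move=> hsT sh sh' e1 e2 x; have [_ [sp1 [sp2 univ]]] := hP.
have [g [_ uniq]] := univ T sT (h \o p1) (h \o p2) hsT
  (star_hom_comp sp1 sh) (star_hom_comp sp2 sh).
by rewrite (uniq h) // (uniq h') // => [a|b]; rewrite /= ?e1 ?e2.
Qed.

End StarFreeProduct.

(** * Morphisms of *-doubles *)

Lemma word_prod_slot (X Y D : algType CC) (iX : X -> D) (iY : Y -> D) l1 e l2 :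
  word_prod iX iY (l1 ++ e :: l2) =
  word_prod iX iY l1 * symbol_emb iX iY e * word_prod iX iY l2.
Proof. by rewrite /word_prod big_cat big_cons /= mulrA. Qed.

Section DoubleMorphism.
Variables (A As : algType CC) (phiA : A -> As) (DA : algType CC)
  (iA : A -> DA) (iAs : As -> DA) (sA : DA -> DA).
Hypotheses (hphiA : anti_iso phiA) (hDA : is_star_double phiA iA iAs sA).
Variables (B Bs : algType CC) (phiB : B -> Bs) (DB : algType CC)
  (iB : B -> DB) (iBs : Bs -> DB) (sB : DB -> DB).
Hypotheses (hphiB : anti_iso phiB) (hDB : is_star_double phiB iB iBs sB).
Variables (rho : A -> B) (h : DA -> DB).
Hypotheses (hrho : alg_hom rho) (hh : alg_hom h)
  (h_iA : forall a, h (iA a) = iB (rho a))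
  (h_iAs : forall a, h (iAs (phiA a)) = iBs (phiB (rho a))).

Lemma double_map_star_hom : star_hom sA sB h.
Proof.
apply: (star_double_star_hom hphiA hDA hDB.2.1) => // a.
by rewrite h_iAs h_iA hDB.2.2.1.
Qed.

(* Choose [A = C 1 (+) A_0] and a linear left inverse [sigma] of [rho]; then
   [B_0 := sigma^-1(A_0)] complements [C 1] in [B], [rho] maps reduced words
   in [A_0], [A_0^*] to reduced words in [B_0], [B_0^*], and [sigma] applied
   letterwise to the latter defines a linear left inverse of [h]. *)
Section LeftInverse.
Variables (SA : A -> Prop) (sigma : B -> A).
Hypotheses (hSA : unit_direct_sum SA) (hsigma : linear_map sigma) (rhoK : cancel rho sigma).

Local Notation SB := (fun b => SA (sigma b)).

Let hSB : unit_direct_sum SB.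
Proof. by apply: unit_direct_sum_preim => //; rewrite -(alg_hom1 hrho) rhoK. Qed.

Let unsymbol (e : symbol B Bs) : symbol A As :=
  match e with
  | inl b => inl (sigma b)
  | inr b' => inr (phiA (sigma (anti_inv hphiB b')))
  end.

Let resymbol (e : symbol A As) : symbol B Bs :=
  match e with
  | inl a => inl (rho a)
  | inr a' => inr (phiB (rho (anti_inv hphiA a')))
  end.

Let pullback (l : seq (symbol B Bs)) : DA :=
  if reduced SB (image_sub phiB SB) l then word_prod iA iAs (map unsymbol l) else 0.

Let pullback_multilinear_at (Z : algType CC) (SZ : Z -> Prop) (inj : Z -> symbol B Bs)
  (side_inj : forall z z', side (inj z) = side (inj z'))
  (sub_inj : forall z, symbol_sub SB (image_sub phiB SB) (inj z) <-> SZ z)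
  (hSZ : subspace SZ)
  (emb_lin : forall c y z, symbol_emb iA iAs (unsymbol (inj (c *: y + z))) =
     c *: symbol_emb iA iAs (unsymbol (inj y)) + symbol_emb iA iAs (unsymbol (inj z))) :
  multilinear_at SZ inj pullback.
Proof.
move=> l1 l2 c y z Sy Sz; have Sw : SZ (c *: y + z) by exact: (subspace_comb hSZ).
rewrite /pullback (reduced_slot side_inj sub_inj l1 l2 Sw Sy).
rewrite (reduced_slot side_inj sub_inj l1 l2 Sz Sy).
case: ifP => _; last by rewrite scaler0 addr0.
by rewrite !map_cat /= !word_prod_slot emb_lin mulrDr mulrDl -!scalerAr -!scalerAl.
Qed.

Let pullback_multilinear : reduced_multilinear SB (image_sub phiB SB) pullback.
Proof.
have hSYB := unit_direct_sum_image hphiB hSB.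
split.
- apply: pullback_multilinear_at => // [|c y z]; first exact: hSB.1.
  by rewrite /= hsigma hDA.1.1.1.
- apply: pullback_multilinear_at => // [|c y z]; first exact: hSYB.1.
  by rewrite /= (anti_inv_anti hphiB).1 hsigma (anti_iso_anti hphiA).1 conjCK hDA.1.2.1.1.
- by move=> l /negbTE Rl; rewrite /pullback Rl.
Qed.

Let unsymbolK m : map unsymbol (map resymbol m) = m.
Proof.
rewrite -map_comp -[RHS]map_id; apply: eq_map => -[a|a'] /=; first by rewrite rhoK.
by rewrite anti_invK rhoK anti_invKV.
Qed.

Let reduced_resymbol m : reduced SA (image_sub phiA SA) m ->
  reduced SB (image_sub phiB SB) (map resymbol m).
Proof.
move=> /andP[alt_m /asboolP sub_m]; apply/andP; split.
  by move: alt_m; rewrite -map_comp; congr alternating; apply: eq_map => -[].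
apply/asboolP; elim: m sub_m {alt_m} => [|e m IH] //= [sub_e sub_m].
split; last exact: IH.
case: e sub_e => [a|a'] /=; first by rewrite rhoK.
by case=> a0 [Sa0 <-]; exists (rho a0); rewrite anti_invK rhoK.
Qed.

Let word_prod_resymbol m : word_prod iB iBs (map resymbol m) = h (word_prod iA iAs m).
Proof.
rewrite /word_prod (alg_hom_prod hh) big_map; apply: eq_bigr => -[a|a'] _ /=.
  by rewrite h_iA.
by rewrite -{2}[a'](anti_invKV hphiA) h_iAs.
Qed.

Lemma double_map_left_inverse : exists L : DB -> DA, cancel h L.
Proof.
have hSYA := unit_direct_sum_image hphiA hSA.
have DA_nontrivial : exists d : DA, d != 0 by exists 1; exact: oner_neq0.
have [L [hL Lw]] := normal_form_ext hSB (unit_direct_sum_image hphiB hSB) hDB.1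
  DA_nontrivial (FunSub pullback_multilinear : family _ _ _).
have hLh : linear_map (fun d => L (h d)) by move=> c x y; rewrite hh.1 hL.
have hid : linear_map (@id DA) by [].
exists L => d; apply/eqP; rewrite -subr_eq0; apply/eqP; move: d.
apply: (normal_form_uniq hSA hSYA hDA.1 (linear_map_sub hLh hid)) => m Rm /=.
rewrite -word_prod_resymbol Lw ?reduced_resymbol // /= /pullback reduced_resymbol //.
by rewrite unsymbolK subrr.
Qed.

End LeftInverse.

Lemma double_map_inj : injective rho -> injective h.
Proof.
move=> rho_inj; have [SA hSA] := unit_direct_sum_exists A.
have [sigma [hsigma rhoK]] := linear_left_inverse hrho.1 rho_inj.
by have [L hK] := double_map_left_inverse hSA hsigma rhoK; exact: can_inj hK.
Qed.

End DoubleMorphism.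

Lemma double_map_exists (A As B Bs : algType CC) (phiA : A -> As) (phiB : B -> Bs)
  (DA DB : algType CC) (iA : A -> DA) (iAs : As -> DA) (sA : DA -> DA)
  (iB : B -> DB) (iBs : Bs -> DB) (sB : DB -> DB) (rho : A -> B) :
  anti_iso phiA -> is_star_double phiA iA iAs sA -> is_star_double phiB iB iBs sB ->
  alg_hom rho -> exists h : DA -> DB, alg_hom h /\
    (forall a, h (iA a) = iB (rho a)) /\ (forall a, h (iAs (phiA a)) = iBs (phiB (rho a))).
Proof.
move=> hphiA hDA hDB hrho.
have [h [[hh _] h_iA h_iAs]] := star_double_ext hphiA hDA hDB.2.1 (alg_hom_comp hrho hDB.1.1).
by exists h; split=> //; split=> // a; rewrite h_iAs hDB.2.2.1.
Qed.

Lemma star_double_dual (A As Ass : algType CC) (phi : A -> As) (psi : As -> Ass)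
  (DA DAs : algType CC) (iA : A -> DA) (iAs : As -> DA) (sA : DA -> DA)
  (jAs : As -> DAs) (jAss : Ass -> DAs) (sAs : DAs -> DAs) :
  anti_iso phi -> is_star_double phi iA iAs sA ->
  anti_iso psi -> is_star_double psi jAs jAss sAs ->
  exists f : DA -> DAs, star_iso sA sAs f.
Proof.
move=> hphi hDA hpsi hDAs.
have [f [sf f_iA f_iAs]] := star_double_ext hphi hDA hDAs.2.1
  (alg_hom_comp (anti_iso_comp hphi hpsi) hDAs.1.2.1).
have [g [sg g_jAs g_jAss]] := star_double_ext hpsi hDAs hDA.2.1 hDA.1.2.1.
exists f; split=> //; exists g => x; rewrite -[RHS]/(id x).
- apply: (star_double_uniq hphi hDA (star_hom_comp sf sg) (star_hom_id sA)) => a.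
  by rewrite /= f_iA /= g_jAss hDA.2.2.2.
- apply: (star_double_uniq hpsi hDAs (star_hom_comp sg sf) (star_hom_id sAs)) => b.
  by rewrite /= g_jAs -[b](anti_invKV hphi) f_iAs /= hDAs.2.2.2.
Qed.

Lemma star_double_double (A As Ass : algType CC) (phi : A -> As) (psi : As -> Ass)
  (DA DAs DAst DDA P : algType CC) (iA : A -> DA) (iAs : As -> DA) (sA : DA -> DA)
  (jAs : As -> DAs) (jAss : Ass -> DAs) (sAs : DAs -> DAs) (chi : DA -> DAst)
  (k1 : DA -> DDA) (k2 : DAst -> DDA) (sDD : DDA -> DDA)
  (sP : P -> P) (p1 : DA -> P) (p2 : DAs -> P) :
  anti_iso phi -> is_star_double phi iA iAs sA ->
  anti_iso psi -> is_star_double psi jAs jAss sAs ->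
  anti_iso chi -> is_star_double chi k1 k2 sDD ->
  is_star_free_product sA sAs sP p1 p2 ->
  exists f : DDA -> P, star_iso sDD sP f.
Proof.
move=> hphi hDA hpsi hDAs hchi hDDA hP; have [hsP [sp1 [sp2 univ]]] := hP.
(* [f] extends the map [D(A) = A * A^* -> P] given by [p1] on [A] and [p2] on
   [A^* <= D(A^* )]; [g] is induced by the two copies of [D(A)] in [D(D(A))]. *)
have [f1 [hf1 [f1_iA f1_iAs]]] := free_product_ext hDA.1
  (alg_hom_comp hDA.1.1 sp1.1) (alg_hom_comp hDAs.1.1 sp2.1).
have [f [sf f_k1 _]] := star_double_ext hchi hDDA hsP hf1.
have [g1 [sg1 g1_iA _]] := star_double_ext hphi hDA hDDA.2.1 (alg_hom_comp hDA.1.1 hDDA.1.1).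
have [g2 [sg2 g2_jAs _]] := star_double_ext hpsi hDAs hDDA.2.1
  (alg_hom_comp hDA.1.2.1 hDDA.1.1).
have [g [[sg [g_p1 g_p2]] _]] := univ DDA sDD g1 g2 hDDA.2.1 sg1 sg2.
have gf1 d : g (f1 d) = k1 d.
  apply: (free_product_uniq hDA.1 (alg_hom_comp hf1 sg.1) hDDA.1.1) => [a|b] /=.
    by rewrite f1_iA g_p1 g1_iA.
  by rewrite f1_iAs g_p2 g2_jAs.
have fg1 d : f (g1 d) = p1 d.
  apply: (star_double_uniq hphi hDA (star_hom_comp sg1 sf) sp1) => a.
  by rewrite /= g1_iA f_k1 f1_iA.
have fg2 d : f (g2 d) = p2 d.
  apply: (star_double_uniq hpsi hDAs (star_hom_comp sg2 sf) sp2) => b.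
  by rewrite /= g2_jAs f_k1 f1_iAs.
exists f; split=> //; exists g => x; rewrite -[RHS]/(id x).
- apply: (star_double_uniq hchi hDDA (star_hom_comp sf sg) (star_hom_id sDD)) => d.
  by rewrite /= f_k1 gf1.
- apply: (star_free_product_uniq hP hsP (star_hom_comp sg sf) (star_hom_id sP)) => d /=.
    by rewrite g_p1 fg1.
  by rewrite g_p2 fg2.
Qed.

Theorem proposition1
  (A As : algType CC) (phiA : A -> As) (hphiA : anti_iso phiA)
  (DA : algType CC) (iA : A -> DA) (iAs : As -> DA) (sA : DA -> DA)
  (hDA : is_star_double phiA iA iAs sA) :
  (* (1) *)
  (forall (B Bs : algType CC) (phiB : B -> Bs), anti_iso phiB ->
   forall (DB : algType CC) (iB : B -> DB) (iBs : Bs -> DB) (sB : DB -> DB),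
   is_star_double phiB iB iBs sB ->
   forall rho : A -> B, alg_hom rho ->
     (exists h : DA -> DB, alg_hom h /\
        (forall a, h (iA a) = iB (rho a)) /\
        (forall a, h (iAs (phiA a)) = iBs (phiB (rho a)))) /\
     (forall h : DA -> DB, alg_hom h ->
        (forall a, h (iA a) = iB (rho a)) ->
        (forall a, h (iAs (phiA a)) = iBs (phiB (rho a))) ->
        star_hom sA sB h /\ (injective rho -> injective h))) /\
  (* (2) *)
  (forall (Cc Cs : algType CC) (phiC : Cc -> Cs), anti_iso phiC ->
   forall (DC : algType CC) (iC : Cc -> DC) (iCs : Cs -> DC) (sC : DC -> DC),
   is_star_double phiC iC iCs sC ->
   forall iota : A -> Cc, alg_hom iota -> injective iota ->
     exists h : DA -> DC, star_hom sA sC h /\ injective h /\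
        (forall a, h (iA a) = iC (iota a)) /\
        (forall a, h (iAs (phiA a)) = iCs (phiC (iota a)))) /\
  (* (3) *)
  (forall S : A -> Prop, unit_direct_sum S ->
     unit_direct_sum (image_sub phiA S) /\
     alternating_tensor_decomposition phiA S iA iAs) /\
  (* (4) *)
  (forall (Ass : algType CC) (psi : As -> Ass), anti_iso psi ->
   forall (DAs : algType CC) (jAs : As -> DAs) (jAss : Ass -> DAs)
          (sAs : DAs -> DAs),
   is_star_double psi jAs jAss sAs ->
     exists f : DA -> DAs, star_iso sA sAs f) /\
  (* (5) *)
  (forall (Ass : algType CC) (psi : As -> Ass), anti_iso psi ->
   forall (DAs : algType CC) (jAs : As -> DAs) (jAss : Ass -> DAs)
          (sAs : DAs -> DAs),
   is_star_double psi jAs jAss sAs ->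
   forall (DAst : algType CC) (chi : DA -> DAst), anti_iso chi ->
   forall (DDA : algType CC) (k1 : DA -> DDA) (k2 : DAst -> DDA)
          (sDD : DDA -> DDA),
   is_star_double chi k1 k2 sDD ->
   forall (P : algType CC) (sP : P -> P) (p1 : DA -> P) (p2 : DAs -> P),
   is_star_free_product sA sAs sP p1 p2 ->
     exists f : DDA -> P, star_iso sDD sP f).
Proof.
split.
  move=> B Bs phiB hphiB DB iB iBs sB hDB rho hrho; split.
    exact: (double_map_exists hphiA hDA hDB hrho).
  move=> h hh h_iA h_iAs; split.
    exact: (double_map_star_hom hphiA hDA hDB hh h_iA h_iAs).
  exact: (double_map_inj hphiA hDA hphiB hDB hrho hh h_iA h_iAs).
split.
  move=> Cc Cs phiC hphiC DC iC iCs sC hDC iota hiota iota_inj.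
  have [h [hh [h_iA h_iAs]]] := double_map_exists hphiA hDA hDC hiota.
  exists h; split; first exact: (double_map_star_hom hphiA hDA hDC hh h_iA h_iAs).
  by split=> //; exact: (double_map_inj hphiA hDA hphiC hDC hiota hh h_iA h_iAs).
split.
  move=> S hS; split; first exact: unit_direct_sum_image.
  exact: (free_product_tensor_decomposition hphiA hS hDA.1).
split=> [Ass psi hpsi DAs jAs jAss sAs hDAs|].
  exact: (star_double_dual hphiA hDA hpsi hDAs).
move=> Ass psi hpsi DAs jAs jAss sAs hDAs DAst chi hchi DDA k1 k2 sDD hDDA P sP p1 p2 hP.
exact: (star_double_double hphiA hDA hpsi hDAs hchi hDDA hP).
Qed.
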